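(* (i) Let $I=[-1,1]$ and let $(\mathcal X_j)_{j\ge1}$ be a sequence of $C^2$-functions $\mathcal X_j: I^2\to \mathbb R$ such that $\partial_x \mathcal X_j$ does not vanish. Let $(\mathcal B_j)_j$ be subsets of $I^2$ with $\mathrm{diam}\,\mathcal B_j\to0$ as $j\to\infty$, and $(x^0_j,y^0_j)\in\mathcal B_j$. Assume that the sequences $\|\partial_x \log|\partial_x \mathcal X_j| \|_{C^0}$ and $\|\partial_y \log|\partial_x \mathcal X_j| \|_{C^0}$ are bounded. Then the maps \[\Upsilon_j : (x,y) \in \mathcal B_j \mapsto \frac{\mathcal X_{j}(x,y)-\mathcal X_{j}(x^0_j,y)}{\partial_x \mathcal X_{j}(x^0_j,y^0_j)} + x^0_j \] are $C^1$-close to the first coordinate projection $(x,y)\mapsto x$ when $j$ is large, i.e. $\sup_{\mathcal B_j}\big(|\Upsilon_j(x,y)-x|+\|D\Upsilon_j(x,y)-(1,0)\|\big)\to 0$ as $j\to\infty$. (ii) Let $\rho>0$, $\tilde I=I+i[-\rho,\rho]$, and let $(\mathcal Z_j)_j$ be holomorphic functions $\mathcal Z_j:\tilde I^2\to\tilde I$ with $0<|\partial_z\mathcal Z_j|<1$. Let $\mathcal B_j\subset\tilde I^2$ and $(z_j,w_j)\in\mathcal B_j$ be such that $\mathrm{diam}\,\mathcal B_j/|\partial_z\mathcal Z_j(z_j,w_j)|\to0$ as $j\to\infty$ and the points $(z_j,w_j)$ stay at distance bounded below by a positive constant from $\partial\tilde I^2$. Then the maps \[ \tilde \Upsilon_j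 : (z,w) \in \mathcal B_j \mapsto \frac{\mathcal Z_{j}(z,w)-\mathcal Z_{j}(z_j,w)}{\partial_z \mathcal Z_{j}(z_j,w_j)} + z_j \] are $C^1$-close to the first coordinate projection $(z,w)\mapsto z$ when $j$ is large, in the same sense. *)

From Stdlib Require Import Reals.
From Coquelicot Require Import Coquelicot.
Open Scope R_scope.

Definition inI (x : R) : Prop := -1 <= x <= 1.
Definition sq (x y : R) : Prop := inI x /\ inI y.

Definition dist2R (x y x' y' : R) : R := sqrt ((x - x') ^ 2 + (y - y') ^ 2).

(* partial derivatives of f : R^2 -> R at (x,y) within the set S
   (one-sided at the boundary of the closed square) *)
Definition rpartial_x (S : R -> R -> Prop) (f : R -> R -> R) (x y l : R) : Prop :=
  forall eps, 0 < eps -> exists delta, 0 < delta /\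
    forall h, h <> 0 -> Rabs h < delta -> S (x + h) y ->
      Rabs ((f (x + h) y - f x y) / h - l) < eps.

Definition rpartial_y (S : R -> R -> Prop) (f : R -> R -> R) (x y l : R) : Prop :=
  forall eps, 0 < eps -> exists delta, 0 < delta /\
    forall h, h <> 0 -> Rabs h < delta -> S x (y + h) ->
      Rabs ((f x (y + h) - f x y) / h - l) < eps.

Definition cont_on (S : R -> R -> Prop) (g : R -> R -> R) : Prop :=
  forall x y, S x y -> forall eps, 0 < eps -> exists delta, 0 < delta /\
    forall x' y', S x' y' -> dist2R x' y' x y < delta ->
      Rabs (g x' y' - g x y) < eps.

Definition C1_on (S : R -> R -> Prop) (g : R -> R -> R) : Prop :=
  exists gx gy : R -> R -> R,
    (forall x y, S x y -> rpartial_x S g x y (gx x y) /\ rpartial_y S g x y (gy x y)) /\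
    cont_on S g /\ cont_on S gx /\ cont_on S gy.

Definition Upsilon (X X1 : nat -> R -> R -> R) (x0 y0 : nat -> R) (j : nat)
  (x y : R) : R :=
  (X j x y - X j (x0 j) y) / X1 j (x0 j) (y0 j) + x0 j.

Definition inIt (rho : R) (z : C) : Prop :=
  -1 <= Re z <= 1 /\ - rho <= Im z <= rho.
Definition inIt_open (rho : R) (z : C) : Prop :=
  -1 < Re z < 1 /\ - rho < Im z < rho.
Definition sqC (rho : R) (z w : C) : Prop := inIt rho z /\ inIt rho w.
Definition bdryC (rho : R) (z w : C) : Prop :=
  sqC rho z w /\ ~ (inIt_open rho z /\ inIt_open rho w).

Definition norm2C (h k : C) : R := sqrt (Cmod h ^ 2 + Cmod k ^ 2).
Definition dist2C (z w z' w' : C) : R := norm2C (Cminus z z') (Cminus w w').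

Definition open2C (U : C -> C -> Prop) : Prop :=
  forall z w, U z w -> exists r, 0 < r /\
    forall z' w', dist2C z' w' z w < r -> U z' w'.

Definition cdiff (f : C -> C -> C) (z w : C) : Prop :=
  exists a b : C, forall eps, 0 < eps -> exists delta, 0 < delta /\
    forall h k : C, 0 < norm2C h k < delta ->
      Cmod (Cminus (Cminus (Cminus (f (Cplus z h) (Cplus w k)) (f z w))
                           (Cmult a h)) (Cmult b k))
        <= eps * norm2C h k.

(* f is holomorphic on the closed set K: holomorphic on an open neighbourhood *)
Definition holo_near (K : C -> C -> Prop) (f : C -> C -> C) : Prop :=
  exists U, open2C U /\ (forall z w, K z w -> U z w) /\
    (forall z w, U z w -> cdiff f z w).

Definition cpartial_z (f : C -> C -> C) (z w a : C) : Prop :=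
  forall eps, 0 < eps -> exists delta, 0 < delta /\
    forall h : C, h <> RtoC 0 -> Cmod h < delta ->
      Cmod (Cminus (Cdiv (Cminus (f (Cplus z h) w) (f z w)) h) a) < eps.
Definition cpartial_w (f : C -> C -> C) (z w a : C) : Prop :=
  forall eps, 0 < eps -> exists delta, 0 < delta /\
    forall h : C, h <> RtoC 0 -> Cmod h < delta ->
      Cmod (Cminus (Cdiv (Cminus (f z (Cplus w h)) (f z w)) h) a) < eps.

Definition UpsilonC (Z Zz : nat -> C -> C -> C) (zc wc : nat -> C) (j : nat)
  (z w : C) : C :=
  Cplus (Cdiv (Cminus (Z j z w) (Z j (zc j) w)) (Zz j (zc j) (wc j))) (zc j).

(* (i) As [ln |d_x X_j|] is [M]-Lipschitz on [I^2], [|d_x X_j|] varies by at most a factor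
   [exp (4 M)], so [d_x X_j] is Lipschitz with constant [M exp (4 M) |c_j|], where
   [c_j = d_x X_j (x0_j, y0_j)].  After division by [c_j], the mean value inequality bounds
   [Upsilon_j - x], [d_x Upsilon_j - 1] and [d_y Upsilon_j] by a multiple of [diam B_j].
   (ii) Cauchy's estimate, derived from Goursat's theorem for rectangles, is applied to
   differences such as [y |-> Z_j (y + d) w - Z_j y w], whose size the complex mean value
   inequality controls.  Hence [d_z Z_j] and [d_w Z_j] are Lipschitz near [(z_j, w_j)] with
   constants depending only on [rho] and the distance to the boundary, and after division by
   [d_z Z_j (z_j, w_j)] all errors are bounded by a multiple of
   [diam B_j / |d_z Z_j (z_j, w_j)|]. *)

From Stdlib Require Import Reals Lra ClassicalEpsilon.
From Coquelicot Require Import Coquelicot.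
Open Scope R_scope.

(** * Elementary real estimates *)

Lemma Rabs_triang3 a b c : Rabs (a - b + c) <= Rabs a + Rabs b + Rabs c.
Proof.
  unfold Rminus. pose proof (Rabs_triang (a + - b) c). pose proof (Rabs_triang a (- b)).
  rewrite Rabs_Ropp in *. lra.
Qed.

Lemma Rabs_between a b s : Rmin a b < s < Rmax a b -> Rabs (s - a) <= Rabs (b - a).
Proof.
  unfold Rmin, Rmax. intros H. destruct Rle_dec.
  - rewrite !Rabs_right by lra. lra.
  - rewrite !Rabs_left by lra. lra.
Qed.

Lemma Rabs_le_mul_of_div a b K : b <> 0 -> Rabs (a / b) <= K -> Rabs a <= K * Rabs b.
Proof.
  intros Hb H. unfold Rdiv in H. rewrite Rabs_mult, Rabs_inv in H.
  pose proof (Rabs_pos_lt _ Hb).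
  apply (Rmult_le_compat_r (Rabs b)) in H; [|lra].
  rewrite Rmult_assoc, Rinv_l, Rmult_1_r in H by lra. exact H.
Qed.

Lemma Rabs_div_le_of_mul a b K : b <> 0 -> Rabs a <= K * Rabs b -> Rabs (a / b) <= K.
Proof.
  intros Hb H. pose proof (Rabs_pos_lt _ Hb).
  unfold Rdiv. rewrite Rabs_mult, Rabs_inv.
  apply (Rmult_le_reg_r (Rabs b)); [lra|]. rewrite Rmult_assoc, Rinv_l, Rmult_1_r by lra.
  exact H.
Qed.

Lemma sqrt_sum_sq_le u v : sqrt (u ^ 2 + v ^ 2) <= Rabs u + Rabs v.
Proof.
  pose proof (Rabs_pos u). pose proof (Rabs_pos v).
  rewrite <- (sqrt_Rsqr (Rabs u + Rabs v)) by lra. apply sqrt_le_1_alt.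
  rewrite Rsqr_pow2, <- (pow2_abs u), <- (pow2_abs v). nra.
Qed.

Lemma Rmult_le_of_le_div (K d eps : R) : 0 < eps -> 0 <= d -> d <= eps / (Rabs K + 1) ->
  K * d <= eps.
Proof.
  intros Heps Hd Hle. pose proof (Rabs_pos K).
  apply Rle_trans with (Rabs K * d); [apply Rmult_le_compat_r; [exact Hd | apply Rle_abs]|].
  apply Rle_trans with (Rabs K * (eps / (Rabs K + 1))); [now apply Rmult_le_compat_l|].
  apply (Rmult_le_reg_r (Rabs K + 1)); [lra|].
  replace (Rabs K * (eps / (Rabs K + 1)) * (Rabs K + 1)) with (Rabs K * eps) by (field; lra). nra.
Qed.

Lemma le_Rmin_mul e1 e2 d c : 0 <= e1 -> 0 <= e2 -> 0 < c <= 1 -> d <= Rmin e1 e2 * c ->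
  d <= e1 /\ d / c <= e2.
Proof.
  intros H1 H2 [Hc0 Hc1] Hd. pose proof (Rmin_l e1 e2). pose proof (Rmin_r e1 e2).
  assert (0 <= Rmin e1 e2) by (apply Rmin_glb; lra). split; [nra|].
  apply (Rmult_le_reg_r c); [exact Hc0|]. unfold Rdiv.
  rewrite Rmult_assoc, Rinv_l, Rmult_1_r by lra.
  nra.
Qed.

(** * Mean value inequalities on the square *)

Definition clamp (lo hi t : R) : R := Rmax lo (Rmin hi t).

Lemma clamp_id lo hi t : lo <= t <= hi -> clamp lo hi t = t.
Proof. intros H. unfold clamp. rewrite Rmin_right by lra. apply Rmax_right; lra. Qed.

Lemma clamp_between lo hi t : lo <= hi -> lo <= clamp lo hi t <= hi.
Proof.
  intros H. unfold clamp. split; [apply Rmax_l|].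
  apply Rmax_lub; [lra | apply Rmin_l].
Qed.

Lemma clamp_contraction lo hi s t : lo <= hi ->
  Rabs (clamp lo hi t - clamp lo hi s) <= Rabs (t - s).
Proof.
  intros H. unfold clamp, Rmax, Rmin.
  repeat destruct Rle_dec; unfold Rabs; repeat destruct Rcase_abs; lra.
Qed.

Lemma continuous_clamp lo hi t : lo <= hi -> continuous (clamp lo hi) t.
Proof.
  intros H. apply continuity_pt_filterlim. intros eps Heps.
  exists eps. split; [exact Heps|]. intros s [_ Hs].
  eapply Rle_lt_trans; [apply clamp_contraction; exact H | exact Hs].
Qed.

(* [MVT_gen] may return an endpoint of the interval, where nothing is known about the
   derivative; clamping the derivative into [[-K, K]] makes the bound hold there too. *)
Lemma mean_value_bound (f : R -> R) (lo hi x1 x2 K : R) :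
  lo <= x1 <= hi -> lo <= x2 <= hi ->
  (forall t, continuous (fun s => f (clamp lo hi s)) t) ->
  (forall s, Rmin x1 x2 < s < Rmax x1 x2 -> exists l, is_derive f s l /\ Rabs l <= K) ->
  Rabs (f x2 - f x1) <= K * Rabs (x2 - x1).
Proof.
  intros H1 H2 Hcont Hder.
  destruct (Req_dec x1 x2) as [<-|Hne].
  { rewrite !Rminus_diag, Rabs_R0. lra. }
  assert (Hmid : Rmin x1 x2 < (x1 + x2) / 2 < Rmax x1 x2).
  { unfold Rmin, Rmax. destruct Rle_dec; lra. }
  assert (HK : 0 <= K).
  { destruct (Hder _ Hmid) as [l [_ Hl]]. pose proof (Rabs_pos l). lra. }
  set (phi := fun s => f (clamp lo hi s)).
  assert (Hphi : forall s, Rmin x1 x2 < s < Rmax x1 x2 ->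
    exists l, is_derive phi s l /\ Rabs l <= K).
  { intros s Hs. destruct (Hder s Hs) as [l [Hl HlK]]. exists l. split; [|exact HlK].
    assert (Hin : lo < s < hi) by (unfold Rmin, Rmax in Hs; destruct Rle_dec; lra).
    apply (is_derive_ext_loc f); [|exact Hl].
    assert (Hr : 0 < Rmin (s - lo) (hi - s)) by (apply Rmin_pos; lra).
    exists (mkposreal _ Hr). intros t Ht. unfold phi. rewrite clamp_id; [reflexivity|].
    change (Rabs (t - s) < Rmin (s - lo) (hi - s)) in Ht.
    pose proof (Rmin_l (s - lo) (hi - s)). pose proof (Rmin_r (s - lo) (hi - s)).
    apply Rabs_def2 in Ht. lra. }
  destruct (MVT_gen phi x1 x2 (fun s => clamp (- K) K (Derive phi s))) as [c [_ Hc]].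
  - intros s Hs. destruct (Hphi s Hs) as [l [Hl HlK]].
    rewrite (is_derive_unique _ _ _ Hl), clamp_id; [exact Hl|].
    pose proof (Rle_abs l); pose proof (Rle_abs (- l)); rewrite Rabs_Ropp in *; lra.
  - intros s _. apply continuity_pt_filterlim, Hcont.
  - unfold phi in Hc. rewrite !clamp_id in Hc by lra.
    rewrite Hc, Rabs_mult. apply Rmult_le_compat_r; [apply Rabs_pos|].
    apply Rabs_le, clamp_between. lra.
Qed.

Lemma continuity_pt_ln_abs v : v <> 0 -> continuity_pt (fun u => ln (Rabs u)) v.
Proof.
  intros Hv. apply (continuity_pt_comp Rabs ln v); [apply Rcontinuity_abs|].
  apply derivable_continuous_pt. exists (/ Rabs v).
  apply derivable_pt_lim_ln, Rabs_pos_lt, Hv.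
Qed.

Lemma is_derive_ln_abs (phi : R -> R) t d : is_derive phi t d -> phi t <> 0 ->
  is_derive (fun s => ln (Rabs (phi s))) t (d / phi t).
Proof.
  intros H Hne.
  pose proof (is_derive_comp ln (fun s => Rabs (phi s)) t _ _
    (is_derive_ln _ (Rabs_pos_lt _ Hne)) (is_derive_Rabs phi t d H Hne)) as Hc.
  replace (d / phi t) with (scal (sign (phi t) * d) (/ Rabs (phi t))); [exact Hc|].
  unfold scal; simpl; unfold mult; simpl.
  destruct (Rlt_or_le 0 (phi t)) as [h|h].
  - rewrite sign_eq_1, Rabs_right by lra. field. lra.
  - assert (h' : phi t < 0) by (destruct h; [lra | congruence]).
    rewrite sign_eq_m1, Rabs_left by lra. field. lra.
Qed.

Lemma dist2R_horizontal x x' y : dist2R x y x' y = Rabs (x - x').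
Proof.
  unfold dist2R. replace ((y - y) ^ 2) with 0 by ring. rewrite Rplus_0_r.
  rewrite <- Rsqr_pow2. apply sqrt_Rsqr_abs.
Qed.

Lemma dist2R_swap x y x' y' : dist2R y x y' x' = dist2R x y x' y'.
Proof. unfold dist2R. now rewrite Rplus_comm. Qed.

Lemma abs_le_dist2R_x x y x' y' : Rabs (x - x') <= dist2R x y x' y'.
Proof.
  unfold dist2R. rewrite <- sqrt_Rsqr_abs, Rsqr_pow2. apply sqrt_le_1_alt.
  pose proof (pow2_ge_0 (y - y')). lra.
Qed.

Lemma abs_le_dist2R_y x y x' y' : Rabs (y - y') <= dist2R x y x' y'.
Proof. rewrite <- dist2R_swap. apply abs_le_dist2R_x. Qed.

Lemma sq_swap x y : sq x y -> sq y x.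
Proof. intros [Hx Hy]. split; assumption. Qed.

Lemma cont_on_swap g : cont_on sq g -> cont_on sq (fun u v => g v u).
Proof.
  intros Hg x y Hxy eps Heps.
  destruct (Hg y x (sq_swap _ _ Hxy) eps Heps) as [d [Hd H]].
  exists d. split; [exact Hd|]. intros x' y' Hs Hdist.
  apply H; [now apply sq_swap | now rewrite dist2R_swap].
Qed.

Lemma rpartial_y_swap g x y l :
  rpartial_y sq g x y l <-> rpartial_x sq (fun u v => g v u) y x l.
Proof.
  split; intros H eps Heps; destruct (H eps Heps) as [d [Hd K]];
    exists d; split; try exact Hd; intros h Hh Hhd Hs; apply K; auto; now apply sq_swap.
Qed.

Lemma continuous_clamped_slice (g : R -> R -> R) y t : cont_on sq g -> inI y ->
  continuous (fun s => g (clamp (-1) 1 s) y) t.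
Proof.
  intros Hg Hy. apply continuity_pt_filterlim. intros eps Heps.
  pose proof (clamp_between (-1) 1 t ltac:(lra)) as Ht.
  destruct (Hg _ y (conj Ht Hy) eps Heps) as [d [Hd H]].
  exists d. split; [exact Hd|]. intros s [_ Hs]. apply H.
  - split; [apply clamp_between; lra | exact Hy].
  - rewrite dist2R_horizontal.
    eapply Rle_lt_trans; [apply clamp_contraction; lra | exact Hs].
Qed.

Lemma rpartial_x_is_derive g s y l : inI y -> -1 < s < 1 ->
  rpartial_x sq g s y l -> is_derive (fun t => g t y) s l.
Proof.
  intros Hy Hs H. apply is_derive_Reals. intros eps Heps.
  destruct (H eps Heps) as [d [Hd K]].
  assert (Hp : 0 < Rmin d (Rmin (1 - s) (s + 1))) by (repeat apply Rmin_pos; lra).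
  exists (mkposreal _ Hp). simpl. intros h Hh0 Hhd.
  pose proof (Rmin_l d (Rmin (1 - s) (s + 1))).
  pose proof (Rmin_r d (Rmin (1 - s) (s + 1))).
  pose proof (Rmin_l (1 - s) (s + 1)). pose proof (Rmin_r (1 - s) (s + 1)).
  apply Rabs_def2 in Hhd.
  apply K; [exact Hh0 | apply Rabs_def1; lra | split; [unfold inI; lra | exact Hy]].
Qed.

Lemma is_derive_rpartial_x g s y l :
  is_derive (fun t => g t y) s l -> rpartial_x sq g s y l.
Proof.
  intros H. apply is_derive_Reals in H. intros eps Heps.
  destruct (H eps Heps) as [d Hd]. exists d. split; [apply cond_pos|].
  intros h Hh0 Hhd _. apply Hd; assumption.
Qed.

Lemma slice_variation_x (g gx : R -> R -> R) K x1 x2 y :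
  cont_on sq g -> inI x1 -> inI x2 -> inI y ->
  (forall s, -1 < s < 1 -> rpartial_x sq g s y (gx s y) /\ Rabs (gx s y) <= K) ->
  Rabs (g x2 y - g x1 y) <= K * Rabs (x2 - x1).
Proof.
  intros Hg H1 H2 Hy Hd.
  apply (mean_value_bound (fun s => g s y) (-1) 1); try assumption.
  - intros t. now apply continuous_clamped_slice.
  - intros s Hs. assert (Hs' : -1 < s < 1).
    { unfold inI in *. unfold Rmin, Rmax in Hs. destruct Rle_dec; lra. }
    destruct (Hd s Hs') as [Hp HK]. exists (gx s y). split; [|exact HK].
    now apply rpartial_x_is_derive.
Qed.

Lemma slice_variation_y (g gy : R -> R -> R) K x y1 y2 :
  cont_on sq g -> inI x -> inI y1 -> inI y2 ->
  (forall t, -1 < t < 1 -> rpartial_y sq g x t (gy x t) /\ Rabs (gy x t) <= K) ->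
  Rabs (g x y2 - g x y1) <= K * Rabs (y2 - y1).
Proof.
  intros Hg Hx H1 H2 Hd.
  apply (slice_variation_x (fun u v => g v u) (fun u v => gy v u)); try assumption.
  - now apply cont_on_swap.
  - intros t Ht. destruct (Hd t Ht) as [Hp HK]. split; [|exact HK].
    now apply rpartial_y_swap.
Qed.

Lemma square_variation (g gx gy : R -> R -> R) K x1 y1 x2 y2 :
  cont_on sq g -> sq x1 y1 -> sq x2 y2 ->
  (forall s t, -1 < s < 1 -> inI t -> rpartial_x sq g s t (gx s t) /\ Rabs (gx s t) <= K) ->
  (forall s t, inI s -> -1 < t < 1 -> rpartial_y sq g s t (gy s t) /\ Rabs (gy s t) <= K) ->
  Rabs (g x2 y2 - g x1 y1) <= K * (Rabs (x2 - x1) + Rabs (y2 - y1)).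
Proof.
  intros Hg [Hx1 Hy1] [Hx2 Hy2] Hdx Hdy.
  pose proof (slice_variation_x g gx K x1 x2 y1 Hg Hx1 Hx2 Hy1 (fun s Hs => Hdx s y1 Hs Hy1)).
  pose proof (slice_variation_y g gy K x2 y1 y2 Hg Hx2 Hy1 Hy2 (fun t Ht => Hdy x2 t Hx2 Ht)).
  replace (g x2 y2 - g x1 y1) with ((g x2 y2 - g x2 y1) + (g x2 y1 - g x1 y1)) by ring.
  eapply Rle_trans; [apply Rabs_triang | lra].
Qed.

Lemma cont_on_comp (g : R -> R -> R) (h : R -> R) : cont_on sq g ->
  (forall x y, sq x y -> continuity_pt h (g x y)) -> cont_on sq (fun u v => h (g u v)).
Proof.
  intros Hg Hh x y Hxy eps Heps.
  destruct (Hh x y Hxy eps Heps) as [a [Ha Hha]].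
  destruct (Hg x y Hxy a Ha) as [d [Hd Hgd]].
  exists d. split; [exact Hd|]. intros x' y' Hs Hdist.
  destruct (Req_dec (g x' y') (g x y)) as [E|E].
  - rewrite E, Rminus_diag, Rabs_R0. exact Heps.
  - apply (Hha (g x' y')). split; [split; [exact I | auto] | apply Hgd; assumption].
Qed.

Lemma exists_small_step y d : inI y -> 0 < d ->
  exists k, k <> 0 /\ Rabs k < d /\ inI (y + k).
Proof.
  intros Hy Hd. set (k := Rmin d 1 / 2).
  assert (Hk : 0 < k < d /\ k <= 1 / 2).
  { unfold k. pose proof (Rmin_l d 1). pose proof (Rmin_r d 1).
    assert (0 < Rmin d 1) by (apply Rmin_pos; lra). lra. }
  unfold inI in *. destruct (Rle_or_lt y 0).
  - exists k. rewrite Rabs_right by lra. repeat split; lra.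
  - exists (- k). rewrite Rabs_Ropp, Rabs_right by lra. repeat split; lra.
Qed.

Lemma rpartial_y_difference_bound g x x0 y l l0 K : inI x -> inI x0 -> inI y ->
  rpartial_y sq g x y l -> rpartial_y sq g x0 y l0 ->
  (forall k, k <> 0 -> inI (y + k) ->
     Rabs ((g x (y + k) - g x y) - (g x0 (y + k) - g x0 y)) <= K * Rabs k) ->
  Rabs (l - l0) <= K.
Proof.
  intros Hx Hx0 Hy H H0 Hk. apply Rle_plus_epsilon. intros e He.
  destruct (H (e / 2) ltac:(lra)) as [d [Hd Hq]].
  destruct (H0 (e / 2) ltac:(lra)) as [d0 [Hd0 Hq0]].
  destruct (exists_small_step y (Rmin d d0) Hy ltac:(now apply Rmin_pos))
    as [k [Hk0 [Hkd Hyk]]].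
  pose proof (Rmin_l d d0). pose proof (Rmin_r d d0).
  specialize (Hq k Hk0 ltac:(lra) (conj Hx Hyk)). specialize (Hq0 k Hk0 ltac:(lra) (conj Hx0 Hyk)).
  pose proof (Rabs_pos_lt _ Hk0).
  assert (Hdiff : Rabs (((g x (y + k) - g x y) - (g x0 (y + k) - g x0 y)) / k) <= K).
  { unfold Rdiv. rewrite Rabs_mult, Rabs_inv.
    apply (Rmult_le_reg_r (Rabs k)); [lra|].
    rewrite Rmult_assoc, Rinv_l, Rmult_1_r by lra. now apply Hk. }
  replace (l - l0) with (((g x (y + k) - g x y) - (g x0 (y + k) - g x0 y)) / k
    - ((g x (y + k) - g x y) / k - l) + ((g x0 (y + k) - g x0 y) / k - l0)) by (field; auto).
  eapply Rle_trans; [apply Rabs_triang3 | lra].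
Qed.

Lemma rpartial_x_normalized (f : R -> R -> R) (g : R -> R) c k x y l : c <> 0 ->
  rpartial_x sq f x y l -> rpartial_x sq (fun u v => (f u v - g v) / c + k) x y (l / c).
Proof.
  intros Hc H eps Heps. pose proof (Rabs_pos_lt _ Hc).
  destruct (H (eps * Rabs c) ltac:(nra)) as [d [Hd Hh]].
  exists d. split; [exact Hd|]. intros h Hh0 Hhd Hs.
  specialize (Hh h Hh0 Hhd Hs).
  replace (((f (x + h) y - g y) / c + k - ((f x y - g y) / c + k)) / h - l / c)
    with (((f (x + h) y - f x y) / h - l) / c) by (field; auto).
  unfold Rdiv at 1. rewrite Rabs_mult, Rabs_inv.
  apply (Rmult_lt_reg_r (Rabs c)); [lra|]. rewrite Rmult_assoc, Rinv_l by lra. lra.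
Qed.

Lemma rpartial_y_normalized (f : R -> R -> R) c k x x0 y l l0 : c <> 0 -> inI x0 ->
  rpartial_y sq f x y l -> rpartial_y sq f x0 y l0 ->
  rpartial_y sq (fun u v => (f u v - f x0 v) / c + k) x y ((l - l0) / c).
Proof.
  intros Hc Hx0 H H0 eps Heps. pose proof (Rabs_pos_lt _ Hc).
  destruct (H (eps * Rabs c / 2) ltac:(nra)) as [d [Hd Hh]].
  destruct (H0 (eps * Rabs c / 2) ltac:(nra)) as [d0 [Hd0 Hh0]].
  exists (Rmin d d0). split; [now apply Rmin_pos|]. intros h Hhn Hhd Hs.
  pose proof (Rmin_l d d0). pose proof (Rmin_r d d0).
  specialize (Hh h Hhn ltac:(lra) Hs).
  specialize (Hh0 h Hhn ltac:(lra) (conj Hx0 (proj2 Hs))).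
  replace (((f x (y + h) - f x0 (y + h)) / c + k - ((f x y - f x0 y) / c + k)) / h - (l - l0) / c)
    with ((((f x (y + h) - f x y) / h - l) - ((f x0 (y + h) - f x0 y) / h - l0)) / c)
    by (field; auto).
  unfold Rdiv at 1. rewrite Rabs_mult, Rabs_inv.
  apply (Rmult_lt_reg_r (Rabs c)); [lra|]. rewrite Rmult_assoc, Rinv_l, Rmult_1_r by lra.
  eapply Rle_lt_trans; [apply Rabs_triang|]. rewrite Rabs_Ropp. lra.
Qed.

(** * The real case *)

Section LogLipschitzDerivative.

Variables (f f1 f2 gx gy : R -> R -> R) (M : R).
Hypothesis f_partials : forall x y, sq x y ->
  rpartial_x sq f x y (f1 x y) /\ rpartial_y sq f x y (f2 x y).
Hypothesis f_cont : cont_on sq f.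
Hypothesis f1_partials : forall x y, sq x y ->
  rpartial_x sq f1 x y (gx x y) /\ rpartial_y sq f1 x y (gy x y).
Hypothesis f1_cont : cont_on sq f1.
Hypothesis f1_neq0 : forall x y, sq x y -> f1 x y <> 0.
Hypothesis ln_f1_partial_x_bound : forall x y L, sq x y ->
  rpartial_x sq (fun u v => ln (Rabs (f1 u v))) x y L -> Rabs L <= M.
Hypothesis ln_f1_partial_y_bound : forall x y L, sq x y ->
  rpartial_y sq (fun u v => ln (Rabs (f1 u v))) x y L -> Rabs L <= M.
Hypothesis M_ge_0 : 0 <= M.

Let A := M * exp (4 * M).

Lemma ln_f1_partial_x s t : -1 < s < 1 -> inI t ->
  rpartial_x sq (fun u v => ln (Rabs (f1 u v))) s t (gx s t / f1 s t).
Proof.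
  intros Hs Ht. assert (Hst : sq s t) by (split; [unfold inI; lra | exact Ht]).
  apply is_derive_rpartial_x, (is_derive_ln_abs (fun u => f1 u t)); [|now apply f1_neq0].
  apply rpartial_x_is_derive; [exact Ht | exact Hs | apply (f1_partials s t Hst)].
Qed.

Lemma ln_f1_partial_y s t : inI s -> -1 < t < 1 ->
  rpartial_y sq (fun u v => ln (Rabs (f1 u v))) s t (gy s t / f1 s t).
Proof.
  intros Hs Ht. assert (Hst : sq s t) by (split; [exact Hs | unfold inI; lra]).
  apply rpartial_y_swap, is_derive_rpartial_x.
  apply (is_derive_ln_abs (fun v => f1 s v)); [|now apply f1_neq0].
  apply (rpartial_x_is_derive (fun u v => f1 v u)); [exact Hs | exact Ht|].
  apply rpartial_y_swap, (f1_partials s t Hst).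
Qed.

Lemma f1_partial_x_le s t : -1 < s < 1 -> inI t -> Rabs (gx s t) <= M * Rabs (f1 s t).
Proof.
  intros Hs Ht. apply Rabs_le_mul_of_div.
  - apply f1_neq0. split; [unfold inI; lra | exact Ht].
  - apply (ln_f1_partial_x_bound s t); [split; [unfold inI; lra | exact Ht]|].
    now apply ln_f1_partial_x.
Qed.

Lemma f1_partial_y_le s t : inI s -> -1 < t < 1 -> Rabs (gy s t) <= M * Rabs (f1 s t).
Proof.
  intros Hs Ht. apply Rabs_le_mul_of_div.
  - apply f1_neq0. split; [exact Hs | unfold inI; lra].
  - apply (ln_f1_partial_y_bound s t); [split; [exact Hs | unfold inI; lra]|].
    now apply ln_f1_partial_y.
Qed.

Lemma abs_f1_le_exp x y x' y' : sq x y -> sq x' y' ->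
  Rabs (f1 x' y') <= exp (4 * M) * Rabs (f1 x y).
Proof.
  intros H H'.
  assert (Hvar : Rabs (ln (Rabs (f1 x' y')) - ln (Rabs (f1 x y)))
                 <= M * (Rabs (x' - x) + Rabs (y' - y))).
  { apply (square_variation (fun u v => ln (Rabs (f1 u v)))
      (fun u v => gx u v / f1 u v) (fun u v => gy u v / f1 u v));
      try assumption.
    - apply (cont_on_comp f1 (fun u => ln (Rabs u))); [exact f1_cont|]. intros u v Huv.
      now apply continuity_pt_ln_abs, f1_neq0.
    - intros s t Hs Ht. split; [now apply ln_f1_partial_x|].
      apply (ln_f1_partial_x_bound s t); [split; [unfold inI; lra | exact Ht]|].
      now apply ln_f1_partial_x.
    - intros s t Hs Ht. split; [now apply ln_f1_partial_y|].
      apply (ln_f1_partial_y_bound s t); [split; [exact Hs | unfold inI; lra]|].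
      now apply ln_f1_partial_y. }
  destruct H as [Hx Hy], H' as [Hx' Hy']. unfold inI in *.
  assert (Rabs (x' - x) <= 2) by (apply Rabs_le; lra).
  assert (Rabs (y' - y) <= 2) by (apply Rabs_le; lra).
  apply Rabs_le_between' in Hvar.
  pose proof (Rabs_pos_lt _ (f1_neq0 x y (conj Hx Hy))).
  pose proof (Rabs_pos_lt _ (f1_neq0 x' y' (conj Hx' Hy'))).
  rewrite <- (exp_ln (Rabs (f1 x' y'))), <- (exp_ln (Rabs (f1 x y))) by lra.
  rewrite <- exp_plus.
  assert (Hle : ln (Rabs (f1 x' y')) <= 4 * M + ln (Rabs (f1 x y))) by nra.
  destruct Hle as [Hlt|Heq]; [left; now apply exp_increasing | right; now rewrite Heq].
Qed.

Lemma f1_variation x y x1 y1 x2 y2 : sq x y -> sq x1 y1 -> sq x2 y2 ->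
  Rabs (f1 x2 y2 - f1 x1 y1) <= A * Rabs (f1 x y) * (Rabs (x2 - x1) + Rabs (y2 - y1)).
Proof.
  intros H H1 H2. apply (square_variation f1 gx gy); try assumption.
  - intros s t Hs Ht. assert (Hst : sq s t) by (split; [unfold inI; lra | exact Ht]).
    split; [apply (f1_partials s t Hst)|].
    eapply Rle_trans; [now apply f1_partial_x_le|]. unfold A. rewrite Rmult_assoc.
    apply Rmult_le_compat_l; [exact M_ge_0 | now apply abs_f1_le_exp].
  - intros s t Hs Ht. assert (Hst : sq s t) by (split; [exact Hs | unfold inI; lra]).
    split; [apply (f1_partials s t Hst)|].
    eapply Rle_trans; [now apply f1_partial_y_le|]. unfold A. rewrite Rmult_assoc.
    apply Rmult_le_compat_l; [exact M_ge_0 | now apply abs_f1_le_exp].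
Qed.

Lemma A_ge_0 : 0 <= A.
Proof. unfold A. apply Rmult_le_pos; [exact M_ge_0 | left; apply exp_pos]. Qed.

Lemma f_first_order x y x0 y0 : sq x y -> sq x0 y0 ->
  Rabs (f x y - f x0 y - f1 x0 y0 * (x - x0))
    <= A * Rabs (f1 x0 y0) * (Rabs (x - x0) + Rabs (y - y0)) * Rabs (x - x0).
Proof.
  intros [Hx Hy] [Hx0 Hy0]. set (c := f1 x0 y0).
  replace (f x y - f x0 y - c * (x - x0)) with ((f x y - c * x) - (f x0 y - c * x0)) by ring.
  apply (mean_value_bound (fun s => f s y - c * s) (-1) 1); try assumption.
  - intros t. apply (continuous_minus (fun s => f (clamp (-1) 1 s) y)
                                     (fun s => c * clamp (-1) 1 s)).
    + now apply continuous_clamped_slice.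
    + apply (continuous_mult (fun _ => c)); [apply continuous_const|].
      apply continuous_clamp. lra.
  - intros s Hs.
    assert (Hs' : -1 < s < 1) by (unfold inI, Rmin, Rmax in *; destruct Rle_dec; lra).
    assert (Hsy : sq s y) by (split; [unfold inI; lra | exact Hy]).
    exists (f1 s y - c * 1). split.
    + apply (is_derive_minus (fun s => f s y) (fun s => c * s)).
      * apply rpartial_x_is_derive; [exact Hy | exact Hs' | apply (f_partials s y Hsy)].
      * apply is_derive_scal. auto_derive; auto.
    + rewrite Rmult_1_r.
      eapply Rle_trans; [apply (f1_variation x0 y0); (split; assumption) || exact Hsy|].
      pose proof (Rabs_between _ _ _ Hs).
      apply Rmult_le_compat_l; [|lra].
      apply Rmult_le_pos; [apply A_ge_0 | apply Rabs_pos].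
Qed.

(* Avoids the symmetry of second derivatives: the difference quotients in [y] of
   [f x - f x0] are bounded by the mean value inequality in [x]. *)
Lemma f2_difference x x0 y xr yr : inI x -> inI x0 -> inI y -> sq xr yr ->
  Rabs (f2 x y - f2 x0 y) <= A * Rabs (f1 xr yr) * Rabs (x - x0).
Proof.
  intros Hx Hx0 Hy Hr.
  apply (rpartial_y_difference_bound f x x0 y); try assumption;
    [apply (f_partials x y) | apply (f_partials x0 y) |]; try (split; assumption).
  intros k Hk Hyk.
  replace (A * Rabs (f1 xr yr) * Rabs (x - x0) * Rabs k)
    with (A * Rabs (f1 xr yr) * Rabs k * Rabs (x - x0)) by ring.
  apply (mean_value_bound (fun s => f s (y + k) - f s y) (-1) 1); try assumption.
  - intros t. apply (continuous_minus (fun s => f (clamp (-1) 1 s) (y + k))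
                                     (fun s => f (clamp (-1) 1 s) y));
      now apply continuous_clamped_slice.
  - intros s Hs.
    assert (Hs' : -1 < s < 1) by (unfold inI, Rmin, Rmax in *; destruct Rle_dec; lra).
    assert (Hs1 : sq s y) by (split; [unfold inI; lra | exact Hy]).
    assert (Hs2 : sq s (y + k)) by (split; [unfold inI; lra | exact Hyk]).
    exists (f1 s (y + k) - f1 s y). split.
    + apply (is_derive_minus (fun s => f s (y + k)) (fun s => f s y));
        apply rpartial_x_is_derive; try assumption;
        [apply (f_partials s (y + k) Hs2) | apply (f_partials s y Hs1)].
    + pose proof (f1_variation xr yr s y s (y + k) Hr Hs1 Hs2) as Hv.
      rewrite Rminus_diag, Rabs_R0, Rplus_0_l in Hv.
      now replace (y + k - y) with k in Hv by ring.
Qed.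

Lemma normalized_map_C1_estimate x y x0 y0 : sq x y -> sq x0 y0 ->
  exists a b,
    rpartial_x sq (fun u v => (f u v - f x0 v) / f1 x0 y0 + x0) x y a /\
    rpartial_y sq (fun u v => (f u v - f x0 v) / f1 x0 y0 + x0) x y b /\
    Rabs ((f x y - f x0 y) / f1 x0 y0 + x0 - x) + sqrt ((a - 1) ^ 2 + b ^ 2)
      <= 8 * A * dist2R x y x0 y0.
Proof.
  intros [Hx Hy] [Hx0 Hy0]. set (c := f1 x0 y0).
  assert (Hc : c <> 0) by now apply f1_neq0.
  pose proof (Rabs_pos_lt _ Hc). pose proof A_ge_0.
  exists (f1 x y / c), ((f2 x y - f2 x0 y) / c). split; [|split].
  - apply rpartial_x_normalized; [exact Hc | apply (f_partials x y); split; assumption].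
  - apply rpartial_y_normalized; try assumption;
      [apply (f_partials x y) | apply (f_partials x0 y)]; split; assumption.
  - set (D := Rabs (x - x0) + Rabs (y - y0)).
    assert (HD : D <= 2 * dist2R x y x0 y0).
    { pose proof (abs_le_dist2R_x x y x0 y0). pose proof (abs_le_dist2R_y x y x0 y0).
      unfold D. lra. }
    assert (Hxx0 : Rabs (x - x0) <= 2) by (unfold inI in *; apply Rabs_le; lra).
    assert (HDx : Rabs (x - x0) <= D) by (unfold D; pose proof (Rabs_pos (y - y0)); lra).
    assert (Ha : Rabs (f1 x y / c - 1) <= A * D).
    { replace (f1 x y / c - 1) with ((f1 x y - c) / c) by (field; exact Hc).
      apply Rabs_div_le_of_mul; [exact Hc|].
      replace (A * D * Rabs c) with (A * Rabs c * D) by ring.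
      apply (f1_variation x0 y0); split; assumption. }
    assert (Hb : Rabs ((f2 x y - f2 x0 y) / c) <= A * D).
    { apply Rabs_div_le_of_mul; [exact Hc|].
      eapply Rle_trans; [apply (f2_difference x x0 y x0 y0); [..| split]; assumption|].
      fold c. replace (A * D * Rabs c) with (A * Rabs c * D) by ring.
      apply Rmult_le_compat_l; [apply Rmult_le_pos; [exact A_ge_0 | apply Rabs_pos] | exact HDx]. }
    assert (Hu : Rabs ((f x y - f x0 y) / c + x0 - x) <= 2 * A * D).
    { replace ((f x y - f x0 y) / c + x0 - x) with ((f x y - f x0 y - c * (x - x0)) / c)
        by (field; exact Hc).
      apply Rabs_div_le_of_mul; [exact Hc|].
      eapply Rle_trans; [apply f_first_order; split; assumption|]. fold c D.
      assert (0 <= A * Rabs c * D).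
      { apply Rmult_le_pos; [apply Rmult_le_pos; [exact A_ge_0 | apply Rabs_pos]|].
        unfold D. pose proof (Rabs_pos (x - x0)). pose proof (Rabs_pos (y - y0)). lra. }
      nra. }
    pose proof (sqrt_sum_sq_le (f1 x y / c - 1) ((f2 x y - f2 x0 y) / c)). nra.
Qed.

End LogLipschitzDerivative.

(** * Complex differentiability *)

Definition is_Cderive (f : C -> C) (z l : C) : Prop :=
  forall eps, 0 < eps -> exists delta, 0 < delta /\
    forall z', Cmod (z' - z) < delta ->
      Cmod (f z' - f z - l * (z' - z))%C <= eps * Cmod (z' - z).

Definition Ccontinuous (f : C -> C) (z : C) : Prop :=
  forall eps, 0 < eps -> exists delta, 0 < delta /\
    forall z', Cmod (z' - z) < delta -> Cmod (f z' - f z)%C < eps.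

Lemma C_eq_of_Re_Im (z w : C) : Re z = Re w -> Im z = Im w -> z = w.
Proof. destruct z, w. simpl. intros -> ->. reflexivity. Qed.

Lemma Cminus_eq_0 (z p : C) : z <> p -> (z - p)%C <> RtoC 0.
Proof. intros H E. apply H. replace z with (z - p + p)%C by ring. rewrite E. ring. Qed.

Lemma Re_Cminus (a b : C) : Re (a - b)%C = Re a - Re b.
Proof. destruct a, b. simpl. ring. Qed.

Lemma Im_Cminus (a b : C) : Im (a - b)%C = Im a - Im b.
Proof. destruct a, b. simpl. ring. Qed.

Lemma Cminus_pair a b c d : ((a, b) - (c, d))%C = (a - c, b - d).
Proof. apply C_eq_of_Re_Im; simpl; ring. Qed.

Lemma neq_of_Re_neq (z p : C) : Re z <> Re p -> z <> p.
Proof. intros H E. now subst. Qed.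

Lemma neq_of_Im_neq (z p : C) : Im z <> Im p -> z <> p.
Proof. intros H E. now subst. Qed.

Lemma Cmod_minus_le a b : Cmod (a - b) <= Cmod a + Cmod b.
Proof. eapply Rle_trans; [apply Cmod_triangle|]. rewrite Cmod_opp. lra. Qed.

Lemma im_le_Cmod c : Rabs (Im c) <= Cmod c.
Proof.
  destruct c as [x y]. unfold Cmod. simpl.
  rewrite <- sqrt_Rsqr_abs. apply sqrt_le_1_alt. rewrite Rsqr_pow2.
  pose proof (pow2_ge_0 x). lra.
Qed.

Lemma Cmod_le_Re_Im c : Cmod c <= Rabs (Re c) + Rabs (Im c).
Proof. destruct c as [x y]. apply sqrt_sum_sq_le. Qed.

Lemma is_Cderive_continuous f z l : is_Cderive f z l -> Ccontinuous f z.
Proof.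
  intros H eps Heps. pose proof (Cmod_ge_0 l).
  destruct (H 1 Rlt_0_1) as [d [Hd Hh]].
  exists (Rmin d (eps / (Cmod l + 2))). split.
  { apply Rmin_pos; [exact Hd | apply Rdiv_lt_0_compat; lra]. }
  intros z' Hz. pose proof (Rmin_l d (eps / (Cmod l + 2))).
  pose proof (Rmin_r d (eps / (Cmod l + 2))). pose proof (Cmod_ge_0 (z' - z)).
  specialize (Hh z' ltac:(lra)).
  replace (f z' - f z)%C with ((f z' - f z - l * (z' - z)) + l * (z' - z))%C by ring.
  eapply Rle_lt_trans; [apply Cmod_triangle|]. rewrite Cmod_mult.
  assert (Cmod (z' - z) * (Cmod l + 2) < eps).
  { apply (Rmult_lt_compat_r (Cmod l + 2)) in Hz; [|lra].
    eapply Rlt_le_trans; [exact Hz|].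
    eapply Rle_trans; [apply Rmult_le_compat_r; [lra | apply Rmin_r]|].
    right. field. lra. }
  nra.
Qed.

Lemma is_Cderive_const (k z : C) : is_Cderive (fun _ => k) z 0.
Proof.
  intros eps Heps. exists 1. split; [lra|]. intros z' _.
  replace (k - k - 0 * (z' - z))%C with (RtoC 0) by ring. rewrite Cmod_0.
  pose proof (Cmod_ge_0 (z' - z)). nra.
Qed.

Lemma is_Cderive_id (z : C) : is_Cderive (fun x => x) z 1.
Proof.
  intros eps Heps. exists 1. split; [lra|]. intros z' _.
  replace (z' - z - 1 * (z' - z))%C with (RtoC 0) by ring. rewrite Cmod_0.
  pose proof (Cmod_ge_0 (z' - z)). nra.
Qed.

Lemma is_Cderive_lincomb f g (a b : C) z l1 l2 :
  is_Cderive f z l1 -> is_Cderive g z l2 ->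
  is_Cderive (fun x => a * f x + b * g x)%C z (a * l1 + b * l2)%C.
Proof.
  intros H1 H2 eps Heps. pose proof (Cmod_ge_0 a). pose proof (Cmod_ge_0 b).
  destruct (H1 (eps / (2 * (Cmod a + 1)))) as [d1 [Hd1 K1]];
    [apply Rdiv_lt_0_compat; lra|].
  destruct (H2 (eps / (2 * (Cmod b + 1)))) as [d2 [Hd2 K2]];
    [apply Rdiv_lt_0_compat; lra|].
  exists (Rmin d1 d2). split; [now apply Rmin_pos|]. intros z' Hz.
  pose proof (Rmin_l d1 d2). pose proof (Rmin_r d1 d2). pose proof (Cmod_ge_0 (z' - z)).
  specialize (K1 z' ltac:(lra)). specialize (K2 z' ltac:(lra)).
  replace (a * f z' + b * g z' - (a * f z + b * g z) - (a * l1 + b * l2) * (z' - z))%C with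
    (a * (f z' - f z - l1 * (z' - z)) + b * (g z' - g z - l2 * (z' - z)))%C by ring.
  eapply Rle_trans; [apply Cmod_triangle|]. rewrite !Cmod_mult.
  assert (Cmod a * Cmod (f z' - f z - l1 * (z' - z))%C <= eps / 2 * Cmod (z' - z)).
  { apply Rle_trans with ((Cmod a + 1) * (eps / (2 * (Cmod a + 1)) * Cmod (z' - z))).
    - apply Rmult_le_compat; [lra | apply Cmod_ge_0 | lra | exact K1].
    - right. field. lra. }
  assert (Cmod b * Cmod (g z' - g z - l2 * (z' - z))%C <= eps / 2 * Cmod (z' - z)).
  { apply Rle_trans with ((Cmod b + 1) * (eps / (2 * (Cmod b + 1)) * Cmod (z' - z))).
    - apply Rmult_le_compat; [lra | apply Cmod_ge_0 | lra | exact K2].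
    - right. field. lra. }
  lra.
Qed.

Lemma Ccontinuous_lincomb f g (a b : C) z : Ccontinuous f z -> Ccontinuous g z ->
  Ccontinuous (fun x => a * f x + b * g x)%C z.
Proof.
  intros H1 H2 eps Heps. pose proof (Cmod_ge_0 a). pose proof (Cmod_ge_0 b).
  destruct (H1 (eps / (2 * (Cmod a + 1)))) as [d1 [Hd1 K1]]; [apply Rdiv_lt_0_compat; lra|].
  destruct (H2 (eps / (2 * (Cmod b + 1)))) as [d2 [Hd2 K2]]; [apply Rdiv_lt_0_compat; lra|].
  exists (Rmin d1 d2). split; [now apply Rmin_pos|]. intros z' Hz.
  pose proof (Rmin_l d1 d2). pose proof (Rmin_r d1 d2).
  specialize (K1 z' ltac:(lra)). specialize (K2 z' ltac:(lra)).
  replace (a * f z' + b * g z' - (a * f z + b * g z))%C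
    with (a * (f z' - f z) + b * (g z' - g z))%C by ring.
  eapply Rle_lt_trans; [apply Cmod_triangle|]. rewrite !Cmod_mult.
  assert (Cmod a * Cmod (f z' - f z)%C <= eps / 2).
  { apply Rle_trans with ((Cmod a + 1) * (eps / (2 * (Cmod a + 1)))).
    - apply Rmult_le_compat; [lra | apply Cmod_ge_0 | lra | lra].
    - right. field. lra. }
  assert (Cmod b * Cmod (g z' - g z)%C < eps / 2).
  { apply Rle_lt_trans with ((Cmod b + 1) * Cmod (g z' - g z)%C).
    - pose proof (Cmod_ge_0 (g z' - g z)%C). nra.
    - apply (Rmult_lt_compat_l (Cmod b + 1)) in K2; [|lra].
      replace ((Cmod b + 1) * (eps / (2 * (Cmod b + 1)))) with (eps / 2) in K2 by (field; lra).
      exact K2. }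
  lra.
Qed.

Lemma is_Cderive_ext f g z l : (forall x, f x = g x) -> is_Cderive f z l -> is_Cderive g z l.
Proof.
  intros E H eps Heps. destruct (H eps Heps) as [d [Hd K]].
  exists d. split; [exact Hd|]. intros z' Hz. rewrite <- !E. now apply K.
Qed.

Lemma is_Cderive_minus f g z l1 l2 : is_Cderive f z l1 -> is_Cderive g z l2 ->
  is_Cderive (fun x => f x - g x)%C z (l1 - l2)%C.
Proof.
  intros H1 H2. replace (l1 - l2)%C with (1 * l1 + (-1) * l2)%C by ring.
  apply (is_Cderive_ext (fun x => 1 * f x + (-1) * g x)%C); [intros; ring|].
  now apply is_Cderive_lincomb.
Qed.

Lemma is_Cderive_scal f (k z l : C) : is_Cderive f z l ->
  is_Cderive (fun x => k * f x)%C z (k * l)%C.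
Proof.
  intros H. replace (k * l)%C with (k * l + 0 * 0)%C by ring.
  apply (is_Cderive_ext (fun x => k * f x + 0 * (fun _ => RtoC 0) x)%C); [intros; ring|].
  apply is_Cderive_lincomb; [exact H | apply is_Cderive_const].
Qed.

Lemma is_Cderive_shift f z d l : is_Cderive f (z + d)%C l ->
  is_Cderive (fun x => f (x + d))%C z l.
Proof.
  intros H eps Heps. destruct (H eps Heps) as [de [Hde K]].
  exists de. split; [exact Hde|]. intros z' Hz.
  replace (z' - z)%C with (z' + d - (z + d))%C by ring. apply K.
  now replace (z' + d - (z + d))%C with (z' - z)%C by ring.
Qed.

Lemma is_Cderive_mult f g z l1 l2 : is_Cderive f z l1 -> is_Cderive g z l2 ->
  is_Cderive (fun x => f x * g x)%C z (l1 * g z + f z * l2)%C.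
Proof.
  intros H1 H2 eps Heps.
  pose proof (Cmod_ge_0 (g z)). pose proof (Cmod_ge_0 (f z)). pose proof (Cmod_ge_0 l1).
  set (K := Cmod (g z) + Cmod (f z) + Cmod l1 + 1).
  assert (HK : 0 < K) by (unfold K; lra).
  destruct (H1 (eps / (3 * K))) as [d1 [Hd1 E1]]; [apply Rdiv_lt_0_compat; lra|].
  destruct (H2 (eps / (3 * K))) as [d2 [Hd2 E2]]; [apply Rdiv_lt_0_compat; lra|].
  destruct (is_Cderive_continuous g z l2 H2 (Rmin 1 (eps / (3 * K)))) as [d3 [Hd3 E3]].
  { apply Rmin_pos; [lra | apply Rdiv_lt_0_compat; lra]. }
  exists (Rmin (Rmin d1 d2) d3). split; [repeat apply Rmin_pos; assumption|].
  intros z' Hz.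
  pose proof (Rmin_l (Rmin d1 d2) d3). pose proof (Rmin_r (Rmin d1 d2) d3).
  pose proof (Rmin_l d1 d2). pose proof (Rmin_r d1 d2).
  pose proof (Rmin_l 1 (eps / (3 * K))). pose proof (Rmin_r 1 (eps / (3 * K))).
  specialize (E1 z' ltac:(lra)). specialize (E2 z' ltac:(lra)). specialize (E3 z' ltac:(lra)).
  set (r := Cmod (z' - z)) in *. assert (Hr : 0 <= r) by apply Cmod_ge_0.
  replace (f z' * g z' - f z * g z - (l1 * g z + f z * l2) * (z' - z))%C with
    ((f z' - f z - l1 * (z' - z)) * g z' + f z * (g z' - g z - l2 * (z' - z))
     + l1 * (z' - z) * (g z' - g z))%C by ring.
  assert (Hg : Cmod (g z') <= K).
  { replace (g z') with (g z + (g z' - g z))%C by ring.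
    eapply Rle_trans; [apply Cmod_triangle|]. unfold K. lra. }
  assert (Hkey : forall a b, 0 <= a <= K -> 0 <= b <= eps / (3 * K) * r -> a * b <= eps / 3 * r).
  { intros a b Ha Hb. apply Rle_trans with (K * (eps / (3 * K) * r)).
    - apply Rmult_le_compat; lra.
    - right. field. lra. }
  eapply Rle_trans; [apply Cmod_triangle|].
  eapply Rle_trans; [apply Rplus_le_compat_r, Cmod_triangle|]. rewrite !Cmod_mult. fold r.
  assert (A1 := Hkey (Cmod (g z')) _ (conj (Cmod_ge_0 _) Hg) (conj (Cmod_ge_0 _) E1)).
  assert (Hf : Cmod (f z) <= K) by (unfold K; lra).
  assert (A2 := Hkey (Cmod (f z)) _ (conj (Cmod_ge_0 _) Hf) (conj (Cmod_ge_0 _) E2)).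
  assert (A3 : Cmod l1 * r * Cmod (g z' - g z)%C <= eps / 3 * r).
  { rewrite Rmult_comm, <- Rmult_assoc. pose proof (Cmod_ge_0 (g z' - g z)%C).
    apply Rmult_le_compat_r; [exact Hr|].
    apply Rle_trans with (eps / (3 * K) * K).
    - apply Rmult_le_compat; [lra | lra | lra | unfold K; lra].
    - right. field. lra. }
  rewrite (Rmult_comm (Cmod (f z' - f z - l1 * (z' - z))%C)). lra.
Qed.

Lemma is_Cderive_inv (z : C) : z <> RtoC 0 -> is_Cderive (fun x => / x)%C z (- / (z * z))%C.
Proof.
  intros Hz eps Heps. set (a := Cmod z). assert (Ha : 0 < a) by now apply Cmod_gt_0.
  exists (Rmin (a / 2) (eps * a ^ 3 / 2)). split.
  { apply Rmin_pos; [lra|].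
    apply Rdiv_lt_0_compat; [apply Rmult_lt_0_compat; [lra | apply pow_lt; lra] | lra]. }
  intros z' Hz'. pose proof (Rmin_l (a / 2) (eps * a ^ 3 / 2)).
  pose proof (Rmin_r (a / 2) (eps * a ^ 3 / 2)).
  set (r := Cmod (z' - z)) in *. assert (Hr : 0 <= r) by apply Cmod_ge_0.
  assert (Ha' : a / 2 <= Cmod z').
  { pose proof (Cmod_minus_le z' (z' - z)%C) as T.
    replace (z' - (z' - z))%C with z in T by ring. fold a r in T. lra. }
  assert (Hz0 : z' <> RtoC 0) by (intros E; rewrite E, Cmod_0 in Ha'; lra).
  replace (/ z' - / z - - / (z * z) * (z' - z))%C with ((z' - z) * (z' - z) / (z * z * z'))%C
    by (field; auto).
  rewrite Cmod_div by (repeat apply Cmult_neq_0; auto). rewrite !Cmod_mult. fold a r.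
  apply Rle_trans with (r * r / (a * a * (a / 2))).
  - unfold Rdiv. apply Rmult_le_compat_l; [nra|].
    apply Rinv_le_contravar; [nra | apply Rmult_le_compat_l; nra].
  - replace (r * r / (a * a * (a / 2))) with (r * (2 * r / a ^ 3)) by (field; lra).
    rewrite (Rmult_comm eps r). apply Rmult_le_compat_l; [exact Hr|].
    apply (Rmult_le_reg_r (a ^ 3)); [apply pow_lt; lra|].
    replace (2 * r / a ^ 3 * a ^ 3) with (2 * r) by (field; lra). lra.
Qed.

(** * Integrals along affine paths *)

Definition affine_path (beta : R -> C) (w : C) : Prop :=
  forall s t, (beta s - beta t)%C = (RtoC (s - t) * w)%C.

Lemma affine_path_horizontal y : affine_path (fun t => (t, y)) 1.
Proof. intros s t. apply C_eq_of_Re_Im; simpl; ring. Qed.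

Lemma affine_path_vertical x : affine_path (fun t => (x, t)) Ci.
Proof. intros s t. apply C_eq_of_Re_Im; simpl; ring. Qed.

Lemma affine_path_segment u v : affine_path (fun t => u + RtoC t * (v - u))%C (v - u).
Proof. intros s t. rewrite RtoC_minus. ring. Qed.

Lemma Cmod_affine_path beta w s t : affine_path beta w ->
  Cmod (beta s - beta t) = Rabs (s - t) * Cmod w.
Proof. intros H. now rewrite H, Cmod_mult, Cmod_R. Qed.

Lemma Re_mul_minus (a x y : C) : Re (a * x)%C - Re (a * y)%C = Re (a * (x - y))%C.
Proof. destruct a, x, y. simpl. ring. Qed.

Lemma Rabs_Re_mul_le (a x : C) : Rabs (Re (a * x)%C) <= Cmod a * Cmod x.
Proof. rewrite <- Cmod_mult. apply re_le_Cmod. Qed.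

Lemma continuous_Re_mul_comp (g : C -> C) (beta : R -> C) (a : C) L t :
  0 <= L -> (forall s, Cmod (beta s - beta t) <= L * Rabs (s - t)) ->
  Ccontinuous g (beta t) -> continuous (fun s => Re (a * g (beta s))%C) t.
Proof.
  intros HL Hb Hg. apply continuity_pt_filterlim. intros eps Heps.
  pose proof (Cmod_ge_0 a).
  destruct (Hg (eps / (Cmod a + 1))) as [d [Hd K]]; [apply Rdiv_lt_0_compat; lra|].
  exists (d / (L + 1)). split; [apply Rdiv_lt_0_compat; lra|]. intros s [_ Hs].
  change (Rabs (s - t) < d / (L + 1)) in Hs.
  change (Rabs (Re (a * g (beta s))%C - Re (a * g (beta t))%C) < eps).
  rewrite Re_mul_minus. eapply Rle_lt_trans; [apply Rabs_Re_mul_le|].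
  assert (Hbeta : Cmod (beta s - beta t) < d).
  { eapply Rle_lt_trans; [apply Hb|].
    apply Rle_lt_trans with ((L + 1) * Rabs (s - t)); [pose proof (Rabs_pos (s - t)); nra|].
    apply (Rmult_lt_compat_l (L + 1)) in Hs; [|lra].
    replace ((L + 1) * (d / (L + 1))) with d in Hs by (field; lra). exact Hs. }
  specialize (K _ Hbeta).
  apply Rle_lt_trans with ((Cmod a + 1) * Cmod (g (beta s) - g (beta t))%C).
  { pose proof (Cmod_ge_0 (g (beta s) - g (beta t))%C). nra. }
  apply (Rmult_lt_compat_l (Cmod a + 1)) in K; [|lra].
  replace ((Cmod a + 1) * (eps / (Cmod a + 1))) with eps in K by (field; lra). exact K.
Qed.

Lemma is_derive_Re_mul_comp (G : C -> C) (beta : R -> C) (w a l : C) t :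
  affine_path beta w -> is_Cderive G (beta t) l ->
  is_derive (fun s => Re (a * G (beta s))%C) t (Re (a * (w * l))%C).
Proof.
  intros Hb HG. apply is_derive_Reals. intros eps Heps.
  set (K := Cmod a * Cmod w + 1).
  assert (HK : 0 < K) by (unfold K; pose proof (Cmod_ge_0 a); pose proof (Cmod_ge_0 w); nra).
  destruct (HG (eps / (2 * K))) as [d [Hd E]]; [apply Rdiv_lt_0_compat; lra|].
  assert (Hp : 0 < d / (Cmod w + 1)) by (pose proof (Cmod_ge_0 w); apply Rdiv_lt_0_compat; lra).
  exists (mkposreal _ Hp). intros h Hh0 Hh. cbv beta.
  change (Rabs h < d / (Cmod w + 1)) in Hh.
  assert (Hstep : (beta (t + h)%R - beta t)%C = (RtoC h * w)%C).
  { rewrite Hb. now replace (t + h - t) with h by ring. }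
  assert (Hdist : Cmod (beta (t + h)%R - beta t) < d).
  { rewrite Hstep, Cmod_mult, Cmod_R. pose proof (Cmod_ge_0 w).
    apply Rle_lt_trans with (Rabs h * (Cmod w + 1)); [pose proof (Rabs_pos h); nra|].
    apply (Rmult_lt_compat_r (Cmod w + 1)) in Hh; [|lra].
    replace (d / (Cmod w + 1) * (Cmod w + 1)) with d in Hh by (field; lra). exact Hh. }
  specialize (E _ Hdist). rewrite Hstep, Cmod_mult, Cmod_R in E.
  replace ((Re (a * G (beta (t + h)%R))%C - Re (a * G (beta t))%C) / h - Re (a * (w * l))%C)
    with (Re (a * (G (beta (t + h)%R) - G (beta t) - l * (RtoC h * w)))%C / h).
  2: { destruct a, w, l, (G (beta (t + h))), (G (beta t)).
       simpl. field. exact Hh0. }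
  unfold Rdiv. rewrite Rabs_mult, Rabs_inv. pose proof (Rabs_pos_lt h Hh0).
  apply (Rmult_lt_reg_r (Rabs h)); [lra|]. rewrite Rmult_assoc, Rinv_l, Rmult_1_r by lra.
  eapply Rle_lt_trans; [apply Rabs_Re_mul_le|].
  apply Rle_lt_trans with (Cmod a * (eps / (2 * K) * (Rabs h * Cmod w))).
  { apply Rmult_le_compat_l; [apply Cmod_ge_0 | exact E]. }
  replace (Cmod a * (eps / (2 * K) * (Rabs h * Cmod w)))
    with (eps / 2 * Rabs h * ((Cmod a * Cmod w) / K)) by (field; lra).
  assert (Cmod a * Cmod w / K < 1).
  { apply (Rmult_lt_reg_r K); [exact HK|]. unfold Rdiv.
    rewrite Rmult_assoc, Rinv_l by lra. unfold K. lra. }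
  assert (0 < eps / 2 * Rabs h) by (apply Rmult_lt_0_compat; lra).
  pose proof (Cmod_ge_0 a). pose proof (Cmod_ge_0 w).
  assert (0 <= Cmod a * Cmod w / K) by (apply Rdiv_le_0_compat; nra).
  nra.
Qed.

Lemma norm_C_R (z : C) : norm (K := R_AbsRing) (V := C_R_NormedModule) z = Cmod z.
Proof.
  destruct z as [x y]. unfold norm; simpl. unfold prod_norm, Cmod. simpl.
  change (norm x) with (Rabs x); change (norm y) with (Rabs y).
  rewrite !Rmult_1_r, <- !Rabs_mult, !Rabs_pos_eq by nra. reflexivity.
Qed.

(* Integrals of [C]-valued functions are handled through the real parts of their multiples
   by complex constants, which determine them (see [C_eq_of_Re_mul]). *)
Lemma is_RInt_Re_mul (f : R -> C) (c : C) a b (I : C) :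
  is_RInt (V := C_R_NormedModule) f a b I ->
  is_RInt (fun t => Re (c * f t)%C) a b (Re (c * I)%C).
Proof.
  intros H.
  pose proof (is_RInt_fct_extend_fst (U := R_NormedModule) (V := R_NormedModule) f a b I H) as H1.
  pose proof (is_RInt_fct_extend_snd (U := R_NormedModule) (V := R_NormedModule) f a b I H) as H2.
  apply is_RInt_scal with (k := Re c) in H1. apply is_RInt_scal with (k := Im c) in H2.
  pose proof (is_RInt_minus _ _ _ _ _ _ H1 H2) as H3.
  replace (Re (c * I)%C) with (Re c * fst I - Im c * snd I)
    by (destruct c as [cr ci], I as [ir ii]; simpl; ring).
  eapply is_RInt_ext; [|exact H3]. intros t _.
  destruct c as [cr ci], (f t) as [fr fi]. simpl. reflexivity.
Qed.

Lemma Re_one_mul (z : C) : Re (1 * z)%C = Re z.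
Proof. destruct z. simpl. ring. Qed.

Lemma Re_mul_minus_Ci (z : C) : Re (- Ci * z)%C = Im z.
Proof. destruct z. simpl. ring. Qed.

Lemma is_RInt_C_of_Re_mul (f : R -> C) a b (I : C) :
  (forall c : C, is_RInt (fun t => Re (c * f t)%C) a b (Re (c * I)%C)) ->
  is_RInt (V := C_R_NormedModule) f a b I.
Proof.
  intros H. destruct I as [ir ii].
  apply (is_RInt_fct_extend_pair (U := R_NormedModule) (V := R_NormedModule)).
  - specialize (H 1%C). rewrite Re_one_mul in H.
    eapply is_RInt_ext; [|exact H]. intros t _. apply Re_one_mul.
  - specialize (H (- Ci)%C). rewrite Re_mul_minus_Ci in H.
    eapply is_RInt_ext; [|exact H]. intros t _. apply Re_mul_minus_Ci.
Qed.

Lemma C_eq_of_Re_mul (x y : C) : (forall c : C, Re (c * x)%C = Re (c * y)%C) -> x = y.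
Proof.
  intros H. pose proof (H 1%C) as H1. pose proof (H (- Ci)%C) as H2.
  rewrite !Re_one_mul in H1. rewrite !Re_mul_minus_Ci in H2. now apply C_eq_of_Re_Im.
Qed.

Lemma is_RInt_Cmult (f : R -> C) (k : C) a b (I : C) :
  is_RInt (V := C_R_NormedModule) f a b I ->
  is_RInt (V := C_R_NormedModule) (fun t => k * f t)%C a b (k * I)%C.
Proof.
  intros H. apply is_RInt_C_of_Re_mul. intros c. rewrite Cmult_assoc.
  apply (is_RInt_ext (fun t => Re ((c * k) * f t)%C)); [intros; now rewrite Cmult_assoc|].
  now apply is_RInt_Re_mul.
Qed.

Definition path_integral (g : C -> C) (beta : R -> C) (w : C) (a b : R) : C :=
  (w * RInt (V := C_R_CompleteNormedModule) (fun t => g (beta t)) a b)%C.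

Section AffinePath.

Variables (beta : R -> C) (w : C).
Hypothesis beta_affine : affine_path beta w.

Lemma continuous_path_Re_mul (g : C -> C) (c : C) t : Ccontinuous g (beta t) ->
  continuous (fun s => Re (c * g (beta s))%C) t.
Proof.
  apply (continuous_Re_mul_comp g beta c (Cmod w)); [apply Cmod_ge_0|].
  intros s. rewrite (Cmod_affine_path _ _ _ _ beta_affine). lra.
Qed.

Lemma is_RInt_path (g : C -> C) a b : a <= b ->
  (forall t, a <= t <= b -> Ccontinuous g (beta t)) ->
  is_RInt (V := C_R_NormedModule) (fun t => g (beta t)) a b
    (RInt (V := C_R_CompleteNormedModule) (fun t => g (beta t)) a b).
Proof.
  intros Hab Hg. apply (RInt_correct (V := C_R_CompleteNormedModule)).
  assert (Hc : forall c : C, ex_RInt (fun t => Re (c * g (beta t))%C) a b).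
  { intros c. apply (ex_RInt_continuous (V := R_CompleteNormedModule)). intros t Ht.
    rewrite Rmin_left, Rmax_right in Ht by exact Hab.
    now apply continuous_path_Re_mul, Hg. }
  exists (RInt (fun t => Re (1 * g (beta t))%C) a b, RInt (fun t => Re (- Ci * g (beta t))%C) a b).
  apply (is_RInt_fct_extend_pair (U := R_NormedModule) (V := R_NormedModule)).
  - eapply is_RInt_ext; [|apply (RInt_correct (V := R_CompleteNormedModule)), Hc]. intros t _.
    apply Re_one_mul.
  - eapply is_RInt_ext; [|apply (RInt_correct (V := R_CompleteNormedModule)), Hc]. intros t _.
    apply Re_mul_minus_Ci.
Qed.

Lemma path_integral_lincomb (g1 g2 : C -> C) (k1 k2 : C) a b : a <= b ->
  (forall t, a <= t <= b -> Ccontinuous g1 (beta t) /\ Ccontinuous g2 (beta t)) ->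
  path_integral (fun z => k1 * g1 z + k2 * g2 z)%C beta w a b
  = (k1 * path_integral g1 beta w a b + k2 * path_integral g2 beta w a b)%C.
Proof.
  intros Hab Hg. unfold path_integral.
  set (I1 := RInt (V := C_R_CompleteNormedModule) (fun t => g1 (beta t)) a b).
  set (I2 := RInt (V := C_R_CompleteNormedModule) (fun t => g2 (beta t)) a b).
  assert (H1 : is_RInt (V := C_R_NormedModule) (fun t => k1 * g1 (beta t))%C a b (k1 * I1)%C).
  { apply is_RInt_Cmult, is_RInt_path; [exact Hab|]. intros t Ht. apply (Hg t Ht). }
  assert (H2 : is_RInt (V := C_R_NormedModule) (fun t => k2 * g2 (beta t))%C a b (k2 * I2)%C).
  { apply is_RInt_Cmult, is_RInt_path; [exact Hab|]. intros t Ht. apply (Hg t Ht). }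
  rewrite (is_RInt_unique (V := C_R_CompleteNormedModule) _ a b (k1 * I1 + k2 * I2)%C).
  - ring.
  - apply is_RInt_C_of_Re_mul. intros c.
    apply is_RInt_Re_mul with (c := c) in H1. apply is_RInt_Re_mul with (c := c) in H2.
    pose proof (is_RInt_plus _ _ _ _ _ _ H1 H2) as H.
    replace (Re (c * (k1 * I1 + k2 * I2))%C) with
      (Re (c * (k1 * I1))%C + Re (c * (k2 * I2))%C)
      by (rewrite Cmult_plus_distr_l; now destruct (c * (k1 * I1))%C, (c * (k2 * I2))%C).
    eapply is_RInt_ext; [|exact H]. intros t _. cbv beta.
    rewrite Cmult_plus_distr_l. now destruct (c * (k1 * g1 (beta t)))%C, (c * (k2 * g2 (beta t)))%C.
Qed.

Lemma path_integral_bound (g : C -> C) a b K : a <= b ->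
  (forall t, a <= t <= b -> Ccontinuous g (beta t) /\ Cmod (g (beta t)) <= K) ->
  Cmod (path_integral g beta w a b) <= Cmod w * ((b - a) * K).
Proof.
  intros Hab Hg. unfold path_integral. rewrite Cmod_mult.
  apply Rmult_le_compat_l; [apply Cmod_ge_0|].
  rewrite <- norm_C_R.
  apply (norm_RInt_le_const (V := C_R_NormedModule) (fun t => g (beta t)) a b); [exact Hab| |].
  - intros t Ht. rewrite norm_C_R. apply (Hg t Ht).
  - apply is_RInt_path; [exact Hab|]. intros t Ht. apply (Hg t Ht).
Qed.

Lemma path_integral_primitive (G g : C -> C) a b : a <= b ->
  (forall t, a <= t <= b -> is_Cderive G (beta t) (g (beta t)) /\ Ccontinuous g (beta t)) ->
  path_integral g beta w a b = (G (beta b) - G (beta a))%C.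
Proof.
  intros Hab Hg. apply C_eq_of_Re_mul. intros c. unfold path_integral.
  rewrite Cmult_assoc, <- Re_mul_minus.
  transitivity (RInt (fun t => Re (c * w * g (beta t))%C) a b).
  - symmetry. apply (is_RInt_unique (V := R_CompleteNormedModule)).
    apply is_RInt_Re_mul, is_RInt_path; [exact Hab|]. intros t Ht. apply (Hg t Ht).
  - apply (is_RInt_unique (V := R_CompleteNormedModule)).
    apply (is_RInt_ext (fun t => Re (c * (w * g (beta t)))%C)).
    { intros t _. now rewrite Cmult_assoc. }
    apply (is_RInt_derive (V := R_CompleteNormedModule) (fun s => Re (c * G (beta s))%C)).
    + intros t Ht. rewrite Rmin_left, Rmax_right in Ht by exact Hab.
      apply is_derive_Re_mul_comp; [exact beta_affine | apply (Hg t Ht)].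
    + intros t Ht. rewrite Rmin_left, Rmax_right in Ht by exact Hab.
      apply (continuous_ext (fun s => Re (c * w * g (beta s))%C)).
      { intros s. now rewrite Cmult_assoc. }
      apply continuous_path_Re_mul, (Hg t Ht).
Qed.

Lemma path_integral_Chasles (g : C -> C) a m b : a <= m <= b ->
  (forall t, a <= t <= b -> Ccontinuous g (beta t)) ->
  (path_integral g beta w a m + path_integral g beta w m b)%C = path_integral g beta w a b.
Proof.
  intros Hm Hg. unfold path_integral. rewrite <- Cmult_plus_distr_l. f_equal.
  apply (RInt_Chasles (V := C_R_CompleteNormedModule)); eexists;
    apply is_RInt_path; try lra; intros t Ht; apply Hg; lra.
Qed.

Lemma Re_mul_path_integral (g : C -> C) (c : C) a b : a <= b ->
  (forall t, a <= t <= b -> Ccontinuous g (beta t)) ->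
  Re (c * path_integral g beta w a b)%C = RInt (fun t => Re (c * w * g (beta t))%C) a b.
Proof.
  intros Hab Hg. symmetry. apply (is_RInt_unique (V := R_CompleteNormedModule)).
  unfold path_integral. rewrite Cmult_assoc. now apply is_RInt_Re_mul, is_RInt_path.
Qed.

End AffinePath.

(** * Rectangle integrals and Goursat's theorem *)

Record rect := Rect { rx0 : R; rx1 : R; ry0 : R; ry1 : R }.

Definition proper_rect (r : rect) : Prop := rx0 r <= rx1 r /\ ry0 r <= ry1 r.
Definition in_rect (r : rect) (z : C) : Prop := rx0 r <= Re z <= rx1 r /\ ry0 r <= Im z <= ry1 r.
Definition on_boundary (r : rect) (z : C) : Prop :=
  in_rect r z /\ (Re z = rx0 r \/ Re z = rx1 r \/ Im z = ry0 r \/ Im z = ry1 r).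
Definition rect_size (r : rect) : R := (rx1 r - rx0 r) + (ry1 r - ry0 r).

Definition rect_integral (g : C -> C) (r : rect) : C :=
  (path_integral g (fun t => (t, ry0 r)) 1 (rx0 r) (rx1 r)
   + path_integral g (fun t => (rx1 r, t)) Ci (ry0 r) (ry1 r)
   - path_integral g (fun t => (t, ry1 r)) 1 (rx0 r) (rx1 r)
   - path_integral g (fun t => (rx0 r, t)) Ci (ry0 r) (ry1 r))%C.

Lemma Cmod_add_sub_sub_le (a b c d : C) :
  Cmod (a + b - c - d) <= Cmod a + Cmod b + Cmod c + Cmod d.
Proof.
  pose proof (Cmod_minus_le (a + b - c) d). pose proof (Cmod_minus_le (a + b) c).
  pose proof (Cmod_triangle a b). lra.
Qed.

Lemma Cmod_sum4_le (a b c d : C) : Cmod (a + b + c + d) <= Cmod a + Cmod b + Cmod c + Cmod d.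
Proof.
  pose proof (Cmod_triangle (a + b + c) d). pose proof (Cmod_triangle (a + b) c).
  pose proof (Cmod_triangle a b). lra.
Qed.

Section Rectangle.

Variables (r : rect) (P : C -> Prop).
Hypothesis r_proper : proper_rect r.
Hypothesis P_boundary : forall z, on_boundary r z -> P z.

Lemma boundary_bottom t : rx0 r <= t <= rx1 r -> P (t, ry0 r).
Proof. intros Ht. apply P_boundary. destruct r_proper. repeat split; simpl; lra. Qed.

Lemma boundary_top t : rx0 r <= t <= rx1 r -> P (t, ry1 r).
Proof. intros Ht. apply P_boundary. destruct r_proper. repeat split; simpl; lra. Qed.

Lemma boundary_left t : ry0 r <= t <= ry1 r -> P (rx0 r, t).
Proof. intros Ht. apply P_boundary. destruct r_proper. repeat split; simpl; lra. Qed.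

Lemma boundary_right t : ry0 r <= t <= ry1 r -> P (rx1 r, t).
Proof. intros Ht. apply P_boundary. destruct r_proper. repeat split; simpl; lra. Qed.

End Rectangle.

Lemma rect_integral_lincomb (g1 g2 : C -> C) (k1 k2 : C) r : proper_rect r ->
  (forall z, on_boundary r z -> Ccontinuous g1 z /\ Ccontinuous g2 z) ->
  rect_integral (fun z => k1 * g1 z + k2 * g2 z)%C r
  = (k1 * rect_integral g1 r + k2 * rect_integral g2 r)%C.
Proof.
  intros Hr Hg. pose proof Hr as [Hx Hy]. unfold rect_integral.
  rewrite (path_integral_lincomb _ _ (affine_path_horizontal (ry0 r)) g1 g2 k1 k2 _ _ Hx
             (boundary_bottom r _ Hr Hg)),
    (path_integral_lincomb _ _ (affine_path_horizontal (ry1 r)) g1 g2 k1 k2 _ _ Hx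
       (boundary_top r _ Hr Hg)),
    (path_integral_lincomb _ _ (affine_path_vertical (rx0 r)) g1 g2 k1 k2 _ _ Hy
       (boundary_left r _ Hr Hg)),
    (path_integral_lincomb _ _ (affine_path_vertical (rx1 r)) g1 g2 k1 k2 _ _ Hy
       (boundary_right r _ Hr Hg)).
  ring.
Qed.

Lemma rect_integral_bound (g : C -> C) r K : proper_rect r ->
  (forall z, on_boundary r z -> Ccontinuous g z /\ Cmod (g z) <= K) ->
  Cmod (rect_integral g r) <= 2 * rect_size r * K.
Proof.
  intros Hr Hg. pose proof Hr as [Hx Hy]. unfold rect_integral, rect_size.
  assert (Hb := path_integral_bound _ _ (affine_path_horizontal (ry0 r)) g (rx0 r) (rx1 r) K Hx
                 (boundary_bottom r _ Hr Hg)).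
  assert (Ht := path_integral_bound _ _ (affine_path_horizontal (ry1 r)) g (rx0 r) (rx1 r) K Hx
                 (boundary_top r _ Hr Hg)).
  assert (Hl := path_integral_bound _ _ (affine_path_vertical (rx0 r)) g (ry0 r) (ry1 r) K Hy
                 (boundary_left r _ Hr Hg)).
  assert (Hrt := path_integral_bound _ _ (affine_path_vertical (rx1 r)) g (ry0 r) (ry1 r) K Hy
                 (boundary_right r _ Hr Hg)).
  rewrite Cmod_1 in Hb, Ht. rewrite Cmod_Ci in Hl, Hrt.
  eapply Rle_trans; [apply Cmod_add_sub_sub_le | lra].
Qed.

Lemma rect_integral_primitive (G g : C -> C) r : proper_rect r ->
  (forall z, on_boundary r z -> is_Cderive G z (g z) /\ Ccontinuous g z) ->
  rect_integral g r = RtoC 0.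
Proof.
  intros Hr Hg. pose proof Hr as [Hx Hy]. unfold rect_integral.
  rewrite (path_integral_primitive _ _ (affine_path_horizontal (ry0 r)) G g _ _ Hx
             (boundary_bottom r _ Hr Hg)),
    (path_integral_primitive _ _ (affine_path_horizontal (ry1 r)) G g _ _ Hx
       (boundary_top r _ Hr Hg)),
    (path_integral_primitive _ _ (affine_path_vertical (rx0 r)) G g _ _ Hy
       (boundary_left r _ Hr Hg)),
    (path_integral_primitive _ _ (affine_path_vertical (rx1 r)) G g _ _ Hy
       (boundary_right r _ Hr Hg)).
  ring.
Qed.

Lemma rect_integral_split_x (g : C -> C) r m : proper_rect r -> rx0 r <= m <= rx1 r ->
  (forall z, on_boundary (Rect (rx0 r) m (ry0 r) (ry1 r)) z -> Ccontinuous g z) ->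
  (forall z, on_boundary (Rect m (rx1 r) (ry0 r) (ry1 r)) z -> Ccontinuous g z) ->
  rect_integral g r = (rect_integral g (Rect (rx0 r) m (ry0 r) (ry1 r))
                       + rect_integral g (Rect m (rx1 r) (ry0 r) (ry1 r)))%C.
Proof.
  intros [Hx Hy] Hm HL HR.
  assert (Hedge : forall y, y = ry0 r \/ y = ry1 r ->
    forall t, rx0 r <= t <= rx1 r -> Ccontinuous g (t, y)).
  { intros y Hy' t Ht. destruct (Rle_dec t m).
    - apply HL. split; [split; simpl; lra | simpl; lra].
    - apply HR. split; [split; simpl; lra | simpl; lra]. }
  unfold rect_integral; simpl.
  rewrite <- (path_integral_Chasles _ _ (affine_path_horizontal (ry0 r)) g (rx0 r) m (rx1 r)),
    <- (path_integral_Chasles _ _ (affine_path_horizontal (ry1 r)) g (rx0 r) m (rx1 r));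
    try (apply Hedge; tauto); try lra.
  ring.
Qed.

Lemma rect_integral_split_y (g : C -> C) r m : proper_rect r -> ry0 r <= m <= ry1 r ->
  (forall z, on_boundary (Rect (rx0 r) (rx1 r) (ry0 r) m) z -> Ccontinuous g z) ->
  (forall z, on_boundary (Rect (rx0 r) (rx1 r) m (ry1 r)) z -> Ccontinuous g z) ->
  rect_integral g r = (rect_integral g (Rect (rx0 r) (rx1 r) (ry0 r) m)
                       + rect_integral g (Rect (rx0 r) (rx1 r) m (ry1 r)))%C.
Proof.
  intros [Hx Hy] Hm HB HT.
  assert (Hedge : forall x, x = rx0 r \/ x = rx1 r ->
    forall t, ry0 r <= t <= ry1 r -> Ccontinuous g (x, t)).
  { intros x Hx' t Ht. destruct (Rle_dec t m).
    - apply HB. split; [split; simpl; lra | simpl; lra].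
    - apply HT. split; [split; simpl; lra | simpl; lra]. }
  unfold rect_integral; simpl.
  rewrite <- (path_integral_Chasles _ _ (affine_path_vertical (rx0 r)) g (ry0 r) m (ry1 r)),
    <- (path_integral_Chasles _ _ (affine_path_vertical (rx1 r)) g (ry0 r) m (ry1 r));
    try (apply Hedge; tauto); try lra.
  ring.
Qed.

Definition quarter (r : rect) (i j : bool) : rect :=
  let mx := (rx0 r + rx1 r) / 2 in
  let my := (ry0 r + ry1 r) / 2 in
  Rect (if i then mx else rx0 r) (if i then rx1 r else mx)
       (if j then my else ry0 r) (if j then ry1 r else my).

Lemma quarter_nested r i j : proper_rect r ->
  proper_rect (quarter r i j) /\
  rx0 r <= rx0 (quarter r i j) /\ rx1 (quarter r i j) <= rx1 r /\
  ry0 r <= ry0 (quarter r i j) /\ ry1 (quarter r i j) <= ry1 r.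
Proof. intros [Hx Hy]. unfold proper_rect. destruct i, j; simpl; lra. Qed.

Lemma quarter_size r i j : rect_size (quarter r i j) = rect_size r * / 2.
Proof. unfold rect_size. destruct i, j; simpl; field. Qed.

Lemma rect_integral_quarters (g : C -> C) r : proper_rect r ->
  (forall z, in_rect r z -> Ccontinuous g z) ->
  rect_integral g r
  = (rect_integral g (quarter r false false) + rect_integral g (quarter r true false)
     + rect_integral g (quarter r false true) + rect_integral g (quarter r true true))%C.
Proof.
  intros [Hx Hy] Hg.
  assert (Hsub : forall r', rx0 r <= rx0 r' -> rx1 r' <= rx1 r ->
    ry0 r <= ry0 r' -> ry1 r' <= ry1 r ->
    forall z, on_boundary r' z -> Ccontinuous g z).
  { intros r' H1 H2 H3 H4 z [[Hzx Hzy] _]. apply Hg. split; lra. }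
  set (mx := (rx0 r + rx1 r) / 2). set (my := (ry0 r + ry1 r) / 2).
  rewrite (rect_integral_split_x g r mx),
    (rect_integral_split_y g (Rect (rx0 r) mx (ry0 r) (ry1 r)) my),
    (rect_integral_split_y g (Rect mx (rx1 r) (ry0 r) (ry1 r)) my);
    try (split; simpl; unfold mx, my; lra); try (apply Hsub; simpl; unfold mx, my; lra).
  unfold quarter. fold mx my. simpl. ring.
Qed.

Lemma nested_intervals (lo hi : nat -> R) :
  (forall n, lo n <= lo (S n)) -> (forall n, hi (S n) <= hi n) -> (forall n, lo n <= hi n) ->
  exists x, forall n, lo n <= x <= hi n.
Proof.
  intros Hlo Hhi Hle.
  assert (Hmono : forall n m, (n <= m)%nat -> lo n <= lo m /\ hi m <= hi n).
  { intros n m Hnm. induction Hnm as [|m _ IH]; [lra|].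
    specialize (Hlo m). specialize (Hhi m). lra. }
  assert (Hcross : forall n m, lo n <= hi m).
  { intros n m. destruct (Hmono n (Nat.max n m) (Nat.le_max_l n m)).
    destruct (Hmono m (Nat.max n m) (Nat.le_max_r n m)).
    specialize (Hle (Nat.max n m)). lra. }
  destruct (completeness (fun x => exists n, x = lo n)) as [x [Hub Hleast]].
  - exists (hi 0%nat). intros y [n ->]. apply Hcross.
  - exists (lo 0%nat), 0%nat. reflexivity.
  - exists x. intros n. split.
    + apply Hub. now exists n.
    + apply Hleast. intros y [m ->]. apply Hcross.
Qed.

Section NestedQuarters.

Variables (P : rect -> Prop) (r0 : rect).
Hypothesis r0_proper : proper_rect r0.
Hypothesis P_r0 : P r0.
Hypothesis P_quarter : forall r, proper_rect r -> P r -> exists i j, P (quarter r i j).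

Let next (r : rect) : rect := epsilon (inhabits r) (fun q => exists i j, q = quarter r i j /\ P q).
Let bisect (n : nat) : rect := Nat.iter n next r0.

Lemma next_quarter r : proper_rect r -> P r -> exists i j, next r = quarter r i j /\ P (next r).
Proof.
  intros Hp HP. destruct (P_quarter r Hp HP) as [i [j H]].
  apply (epsilon_spec (inhabits r) (fun q => exists i j, q = quarter r i j /\ P q)).
  now exists (quarter r i j), i, j.
Qed.

Lemma bisect_spec n : proper_rect (bisect n) /\ P (bisect n).
Proof.
  induction n as [|n [Hp HP]]; [split; assumption|].
  destruct (next_quarter _ Hp HP) as [i [j [Hq HP']]].
  change (bisect (S n)) with (next (bisect n)). rewrite Hq in HP' |- *.
  split; [apply quarter_nested, Hp | exact HP'].
Qed.

Lemma bisect_step n : exists i j, bisect (S n) = quarter (bisect n) i j.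
Proof.
  destruct (bisect_spec n) as [Hp HP]. destruct (next_quarter _ Hp HP) as [i [j [Hq _]]].
  now exists i, j.
Qed.

Lemma bisect_size n : rect_size (bisect n) = rect_size r0 * (/ 2) ^ n.
Proof.
  induction n as [|n IH]; [simpl; ring|].
  destruct (bisect_step n) as [i [j ->]]. rewrite quarter_size, IH. simpl. ring.
Qed.

Lemma bisect_limit_point : exists p, forall n, in_rect (bisect n) p.
Proof.
  assert (Hstep : forall n, proper_rect (bisect n) /\
    rx0 (bisect n) <= rx0 (bisect (S n)) /\ rx1 (bisect (S n)) <= rx1 (bisect n) /\
    ry0 (bisect n) <= ry0 (bisect (S n)) /\ ry1 (bisect (S n)) <= ry1 (bisect n)).
  { intros n. destruct (bisect_spec n) as [Hp _]. destruct (bisect_step n) as [i [j ->]].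
    pose proof (quarter_nested _ i j Hp). tauto. }
  destruct (nested_intervals (fun n => rx0 (bisect n)) (fun n => rx1 (bisect n))) as [px Hpx];
    try (intros n; destruct (Hstep n) as [[? ?] ?]; tauto).
  destruct (nested_intervals (fun n => ry0 (bisect n)) (fun n => ry1 (bisect n))) as [py Hpy];
    try (intros n; destruct (Hstep n) as [[? ?] ?]; tauto).
  exists (px, py). intros n. split; [apply Hpx | apply Hpy].
Qed.

Theorem nested_quarters : exists p, in_rect r0 p /\ forall delta, 0 < delta ->
  exists r, proper_rect r /\ P r /\ in_rect r p /\ rect_size r < delta.
Proof.
  destruct bisect_limit_point as [p Hp]. exists p. split; [exact (Hp 0%nat)|].
  intros delta Hdelta.
  assert (Hs : 0 <= rect_size r0) by (destruct r0_proper; unfold rect_size; lra).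
  destruct (pow_lt_1_zero (/ 2) ltac:(rewrite Rabs_pos_eq; lra) (delta / (rect_size r0 + 1)))
    as [n Hn]; [apply Rdiv_lt_0_compat; lra|].
  specialize (Hn n (Nat.le_refl n)). rewrite Rabs_pos_eq in Hn by (apply pow_le; lra).
  exists (bisect n). destruct (bisect_spec n) as [Hpr HP].
  split; [exact Hpr|]. split; [exact HP|]. split; [apply Hp|].
  rewrite bisect_size.
  apply Rle_lt_trans with ((rect_size r0 + 1) * (/ 2) ^ n).
  - apply Rmult_le_compat_r; [apply pow_le | ]; lra.
  - apply (Rmult_lt_compat_l (rect_size r0 + 1)) in Hn; [|lra].
    replace ((rect_size r0 + 1) * (delta / (rect_size r0 + 1))) with delta in Hn by (field; lra).
    exact Hn.
Qed.

End NestedQuarters.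

Lemma Cmod_sub_le_rect_size r z p : in_rect r z -> in_rect r p -> Cmod (z - p) <= rect_size r.
Proof.
  intros [Hzx Hzy] [Hpx Hpy]. eapply Rle_trans; [apply Cmod_le_Re_Im|].
  unfold rect_size. destruct z as [zx zy], p as [px py]. simpl in *.
  assert (Rabs (zx + - px) <= rx1 r - rx0 r) by (apply Rabs_le; lra).
  assert (Rabs (zy + - py) <= ry1 r - ry0 r) by (apply Rabs_le; lra). lra.
Qed.

Lemma is_Cderive_affine_primitive (a l p z : C) :
  is_Cderive (fun x => a * x + (l / 2) * ((x - p) * (x - p)))%C z (a + l * (z - p))%C.
Proof.
  assert (Hs : is_Cderive (fun x => x - p)%C z (1 - 0)%C)
    by (apply is_Cderive_minus; [apply is_Cderive_id | apply is_Cderive_const]).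
  pose proof (is_Cderive_lincomb _ _ a (l / 2) z _ _ (is_Cderive_id z)
                (is_Cderive_mult _ _ z _ _ Hs Hs)) as H.
  replace (a + l * (z - p))%C with (a * 1 + l / 2 * ((1 - 0) * (z - p) + (z - p) * (1 - 0)))%C;
    [exact H|].
  field.
Qed.

Lemma rect_integral_local_bound (g : C -> C) (p l : C) eps delta r : 0 <= eps ->
  (forall z, Cmod (z - p) < delta -> Cmod (g z - g p - l * (z - p))%C <= eps * Cmod (z - p)) ->
  proper_rect r -> in_rect r p -> rect_size r < delta ->
  (forall z, on_boundary r z -> Ccontinuous g z) ->
  Cmod (rect_integral g r) <= 2 * eps * rect_size r ^ 2.
Proof.
  intros Heps Hg Hr Hp Hsize Hcont.
  set (A := fun z => (g p + l * (z - p))%C).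
  assert (HA : forall z, is_Cderive (fun x => g p * x + (l / 2) * ((x - p) * (x - p)))%C z (A z))
    by (intros; apply is_Cderive_affine_primitive).
  assert (HAc : forall z, Ccontinuous A z).
  { intros z.
    assert (Hs : is_Cderive (fun x => x - p)%C z (1 - 0)%C)
      by (apply is_Cderive_minus; [apply is_Cderive_id | apply is_Cderive_const]).
    pose proof (is_Cderive_lincomb _ _ 1 l z _ _ (is_Cderive_const (g p) z) Hs) as H.
    apply (is_Cderive_continuous _ _ (1 * 0 + l * (1 - 0))%C).
    eapply is_Cderive_ext; [|exact H]. intros x. unfold A. cbv beta. ring. }
  replace (rect_integral g r) with (rect_integral (fun z => 1 * g z + (-1) * A z)%C r).
  2: { rewrite rect_integral_lincomb by (auto; intros z Hz; split; auto).
       rewrite (rect_integral_primitive (fun x => g p * x + (l / 2) * ((x - p) * (x - p)))%C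
         A r Hr); [ring|].
       intros z _. split; [apply HA | apply HAc]. }
  replace (2 * eps * rect_size r ^ 2) with (2 * rect_size r * (eps * rect_size r)) by ring.
  apply rect_integral_bound; [exact Hr|]. intros z Hz. split.
  - apply Ccontinuous_lincomb; [now apply Hcont | apply HAc].
  - assert (Hzp : Cmod (z - p) <= rect_size r)
      by (apply Cmod_sub_le_rect_size; [apply Hz | exact Hp]).
    replace (1 * g z + -1 * A z)%C with (g z - g p - l * (z - p))%C by (unfold A; ring).
    eapply Rle_trans; [apply Hg; lra|]. now apply Rmult_le_compat_l.
Qed.

Lemma quarter_with_large_integral (g : C -> C) q c : proper_rect q ->
  (forall z, in_rect q z -> Ccontinuous g z) ->
  c * rect_size q ^ 2 < Cmod (rect_integral g q) ->
  exists i j, c * rect_size (quarter q i j) ^ 2 < Cmod (rect_integral g (quarter q i j)).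
Proof.
  intros Hq Hcont Hlarge.
  destruct (Rlt_le_dec (c * rect_size (quarter q false false) ^ 2)
              (Cmod (rect_integral g (quarter q false false)))); [eauto|].
  destruct (Rlt_le_dec (c * rect_size (quarter q true false) ^ 2)
              (Cmod (rect_integral g (quarter q true false)))); [eauto|].
  destruct (Rlt_le_dec (c * rect_size (quarter q false true) ^ 2)
              (Cmod (rect_integral g (quarter q false true)))); [eauto|].
  destruct (Rlt_le_dec (c * rect_size (quarter q true true) ^ 2)
              (Cmod (rect_integral g (quarter q true true)))); [eauto|].
  exfalso. rewrite !quarter_size in *. rewrite rect_integral_quarters in Hlarge by assumption.
  pose proof (Cmod_sum4_le (rect_integral g (quarter q false false))
    (rect_integral g (quarter q true false)) (rect_integral g (quarter q false true))
    (rect_integral g (quarter q true true))). nra.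
Qed.

(* Goursat: a rectangle integral of size [s] whose modulus exceeds [c s^2] has a quarter with
   the same property; the quarters shrink to a point where differentiability gives a bound
   [2 eps s^2] for small rectangles, a contradiction for [eps = c / 2]. *)
Theorem Goursat (g : C -> C) r : proper_rect r ->
  (forall z, in_rect r z -> exists l, is_Cderive g z l) -> rect_integral g r = RtoC 0.
Proof.
  intros Hr Hd.
  assert (Hcont : forall z, in_rect r z -> Ccontinuous g z).
  { intros z Hz. destruct (Hd z Hz) as [l Hl]. exact (is_Cderive_continuous _ _ _ Hl). }
  apply Cmod_eq_0. destruct (Req_dec (Cmod (rect_integral g r)) 0) as [|Hne]; [assumption|].
  exfalso. pose proof (Cmod_ge_0 (rect_integral g r)) as Hge.
  set (c := Cmod (rect_integral g r) / (rect_size r ^ 2 + 1)).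
  assert (Hc : 0 < c)
    by (unfold c; apply Rdiv_lt_0_compat; [lra | pose proof (pow2_ge_0 (rect_size r)); lra]).
  set (P := fun q => (forall z, in_rect q z -> in_rect r z) /\
                     c * rect_size q ^ 2 < Cmod (rect_integral g q)).
  assert (HPr : P r).
  { split; [easy|]. unfold c. apply (Rmult_lt_reg_r (rect_size r ^ 2 + 1));
      [pose proof (pow2_ge_0 (rect_size r)); lra|].
    field_simplify; [| pose proof (pow2_ge_0 (rect_size r)); lra]. nra. }
  assert (Hstep : forall q, proper_rect q -> P q -> exists i j, P (quarter q i j)).
  { intros q Hq [Hsub HPq].
    destruct (quarter_with_large_integral g q c Hq (fun z Hz => Hcont z (Hsub z Hz)) HPq)
      as [i [j Hij]].
    exists i, j. split; [|exact Hij]. intros z [Hzx Hzy]. apply Hsub.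
    pose proof (quarter_nested q i j Hq). split; lra. }
  destruct (nested_quarters P r Hr HPr Hstep) as [p [Hp Hsmall]].
  destruct (Hd p Hp) as [l Hl].
  destruct (Hl (c / 2) ltac:(lra)) as [delta [Hdelta Hloc]].
  destruct (Hsmall delta Hdelta) as [q [Hq [[Hsub HPq] [Hpq Hsize]]]].
  pose proof (rect_integral_local_bound g p l (c / 2) delta q ltac:(lra) Hloc Hq Hpq Hsize
    (fun z Hz => Hcont z (Hsub z (proj1 Hz)))).
  lra.
Qed.

(** * Cauchy's estimate and the complex mean value inequality *)

Definition square (p : C) (s : R) : rect := Rect (Re p - s) (Re p + s) (Im p - s) (Im p + s).

Lemma square_proper p s : 0 <= s -> proper_rect (square p s).
Proof. intros Hs. unfold proper_rect, square; simpl. lra. Qed.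

Lemma square_size p s : rect_size (square p s) = 4 * s.
Proof. unfold rect_size, square; simpl. ring. Qed.

Lemma square_center p s : 0 <= s -> in_rect (square p s) p.
Proof. intros Hs. unfold in_rect, square; simpl. lra. Qed.

Lemma square_boundary_dist p r z : 0 < r -> on_boundary (square p r) z ->
  z <> p /\ r <= Cmod (z - p).
Proof.
  intros Hr [_ Hb]. destruct z as [x y], p as [px py]. unfold square in Hb; simpl in Hb.
  pose proof (re_le_Cmod ((x, y) - (px, py))%C) as H1.
  pose proof (im_le_Cmod ((x, y) - (px, py))%C) as H2.
  rewrite Cminus_pair in *. simpl in H1, H2.
  assert (Hd : r <= Rabs (x - px) \/ r <= Rabs (y - py))
    by (unfold Rabs; destruct Rcase_abs, Rcase_abs; lra).
  split; [|lra]. intros E. injection E as -> ->.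
  rewrite !Rminus_diag, Rabs_R0 in Hd. lra.
Qed.

(* The integral over the annulus between two concentric squares vanishes: cut it into four
   rectangles avoiding the center and apply Goursat to each. *)
Lemma rect_integral_square_shrink (g : C -> C) p r s : 0 < r < s ->
  (forall z, in_rect (square p s) z -> z <> p -> exists l, is_Cderive g z l) ->
  rect_integral g (square p s) = rect_integral g (square p r).
Proof.
  intros Hrs Hg. destruct p as [px py].
  assert (Hcont : forall q, rx0 (square (px, py) s) <= rx0 q -> rx1 q <= rx1 (square (px, py) s) ->
      ry0 (square (px, py) s) <= ry0 q -> ry1 q <= ry1 (square (px, py) s) ->
      rx0 q <> px -> rx1 q <> px -> ry0 q <> py -> ry1 q <> py ->
      forall z, on_boundary q z -> Ccontinuous g z).
  { intros q H1 H2 H3 H4 H5 H6 H7 H8 z [[Hzx Hzy] Hb].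
    destruct (Hg z) as [l Hl]; [split; lra|..].
    - destruct Hb as [E|[E|[E|E]]]; [apply neq_of_Re_neq | apply neq_of_Re_neq
        | apply neq_of_Im_neq | apply neq_of_Im_neq]; simpl; lra.
    - exact (is_Cderive_continuous _ _ _ Hl). }
  assert (Hzero : forall q, proper_rect q -> rx0 (square (px, py) s) <= rx0 q ->
      rx1 q <= rx1 (square (px, py) s) -> ry0 (square (px, py) s) <= ry0 q ->
      ry1 q <= ry1 (square (px, py) s) -> (rx1 q < px \/ px < rx0 q \/ ry1 q < py \/ py < ry0 q) ->
      rect_integral g q = RtoC 0).
  { intros q Hq H1 H2 H3 H4 Hout. apply Goursat; [exact Hq|]. intros z [Hzx Hzy].
    apply Hg; [split; lra|].
    destruct Hout as [O|[O|[O|O]]]; [apply neq_of_Re_neq | apply neq_of_Re_neq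
      | apply neq_of_Im_neq | apply neq_of_Im_neq]; simpl; lra. }
  unfold square; simpl in *.
  rewrite (rect_integral_split_x g (Rect (px - s) (px + s) (py - s) (py + s)) (px - r))
    by (first [split; simpl; lra | apply Hcont; simpl; lra]); simpl.
  rewrite (rect_integral_split_x g (Rect (px - r) (px + s) (py - s) (py + s)) (px + r))
    by (first [split; simpl; lra | apply Hcont; simpl; lra]); simpl.
  rewrite (rect_integral_split_y g (Rect (px - r) (px + r) (py - s) (py + s)) (py - r))
    by (first [split; simpl; lra | apply Hcont; simpl; lra]); simpl.
  rewrite (rect_integral_split_y g (Rect (px - r) (px + r) (py - r) (py + s)) (py + r))
    by (first [split; simpl; lra | apply Hcont; simpl; lra]); simpl.
  rewrite (Hzero (Rect (px - s) (px - r) (py - s) (py + s))),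
    (Hzero (Rect (px + r) (px + s) (py - s) (py + s))),
    (Hzero (Rect (px - r) (px + r) (py - s) (py - r))),
    (Hzero (Rect (px - r) (px + r) (py + r) (py + s)))
    by (first [split; simpl; lra | simpl; lra]).
  ring.
Qed.

Definition inv_sub (p z : C) : C := (/ (z - p))%C.

Lemma is_Cderive_inv_sub p z : z <> p ->
  is_Cderive (inv_sub p) z (- (inv_sub p z * inv_sub p z))%C.
Proof.
  intros Hz. pose proof (Cminus_eq_0 _ _ Hz) as Hz'.
  apply (is_Cderive_ext (fun x => / (x + - p))%C); [reflexivity|].
  apply is_Cderive_shift.
  replace (- (inv_sub p z * inv_sub p z))%C with (- / ((z + - p) * (z + - p)))%C
    by (unfold inv_sub; field; exact Hz').
  now apply is_Cderive_inv.
Qed.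

Lemma is_Cderive_inv_sub_sq p z : z <> p -> exists l,
  is_Cderive (fun x => inv_sub p x * inv_sub p x)%C z l.
Proof.
  intros Hz. eexists. apply is_Cderive_mult; apply is_Cderive_inv_sub, Hz.
Qed.

Lemma rect_integral_inv_sub_sq p r : 0 < r ->
  rect_integral (fun z => inv_sub p z * inv_sub p z)%C (square p r) = RtoC 0.
Proof.
  intros Hr. apply (rect_integral_primitive (fun z => (-1) * inv_sub p z)%C);
    [apply square_proper; lra|].
  intros z [[Hzx Hzy] Hb]. unfold square in *; simpl in *.
  assert (Hz : z <> p).
  { destruct Hb as [E|[E|[E|E]]]; [apply neq_of_Re_neq | apply neq_of_Re_neq
      | apply neq_of_Im_neq | apply neq_of_Im_neq]; lra. }
  split.
  - replace (inv_sub p z * inv_sub p z)%C with (-1 * - (inv_sub p z * inv_sub p z))%C by ring.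
    apply is_Cderive_scal, is_Cderive_inv_sub, Hz.
  - destruct (is_Cderive_inv_sub_sq p z Hz) as [l Hl]. exact (is_Cderive_continuous _ _ _ Hl).
Qed.

Lemma Re_mul_Cinv (c : C) x y : Re (c * / (x, y))%C = (Re c * x + Im c * y) / (x ^ 2 + y ^ 2).
Proof. destruct c. unfold Cinv. simpl. unfold Rdiv. ring. Qed.

Lemma inv_two_le_frac r A B : 0 < r -> A ^ 2 <= r ^ 2 -> B ^ 2 = r ^ 2 ->
  / (2 * r) <= r / (A ^ 2 + B ^ 2).
Proof.
  intros Hr HA ->. replace (/ (2 * r)) with (r * / (2 * r ^ 2)) by (field; lra).
  unfold Rdiv. apply Rmult_le_compat_l; [lra|].
  apply Rinv_le_contravar; [pose proof (pow2_ge_0 A); nra | lra].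
Qed.

Lemma RInt_ge_1 (f : R -> R) a b : a < b -> ex_RInt f a b ->
  (forall t, a < t < b -> / (b - a) <= f t) -> 1 <= RInt f a b.
Proof.
  intros Hab He Hf. replace 1 with (RInt (fun _ => / (b - a)) a b).
  - apply RInt_le; [lra | apply ex_RInt_const | exact He | exact Hf].
  - rewrite RInt_const. unfold scal; simpl; unfold mult; simpl. field. lra.
Qed.

Lemma path_integral_Re_ge_1 (g : C -> C) beta w (c : C) a b : affine_path beta w -> a < b ->
  (forall t, a <= t <= b -> Ccontinuous g (beta t)) ->
  (forall t, a < t < b -> / (b - a) <= Re (c * w * g (beta t))%C) ->
  1 <= Re (c * path_integral g beta w a b)%C.
Proof.
  intros Hb Hab Hg Hlow. rewrite Re_mul_path_integral by (auto; lra).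
  apply RInt_ge_1; [exact Hab | | exact Hlow].
  apply (ex_RInt_continuous (V := R_CompleteNormedModule)). intros t Ht.
  rewrite Rmin_left, Rmax_right in Ht by lra.
  apply (continuous_path_Re_mul _ _ Hb), Hg, Ht.
Qed.

Lemma Im_add_sub_sub (b rt tp lf : C) :
  Im (b + rt - tp - lf)%C = Re (- Ci * b)%C + Re (- Ci * rt)%C + Re (Ci * tp)%C + Re (Ci * lf)%C.
Proof. destruct b, rt, tp, lf. simpl. ring. Qed.

(* The exact value is [2 pi i]; each side contributes at least [1] to the imaginary part. *)
Lemma Im_rect_integral_inv_sub p r : 0 < r -> 4 <= Im (rect_integral (inv_sub p) (square p r)).
Proof.
  intros Hr. destruct p as [px py].
  assert (Hc : forall z, z <> (px, py) -> Ccontinuous (inv_sub (px, py)) z)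
    by (intros z Hz; exact (is_Cderive_continuous _ _ _ (is_Cderive_inv_sub _ _ Hz))).
  assert (Hlen : px + r - (px - r) = 2 * r /\ py + r - (py - r) = 2 * r) by (split; ring).
  unfold rect_integral. rewrite Im_add_sub_sub.
  change (square (px, py) r) with (Rect (px - r) (px + r) (py - r) (py + r)).
  cbn [rx0 rx1 ry0 ry1]. unfold inv_sub.
  match goal with |- 4 <= ?a + ?b + ?c + ?d =>
    cut (1 <= a /\ 1 <= b /\ 1 <= c /\ 1 <= d); [lra|] end.
  repeat split; (apply path_integral_Re_ge_1;
    [apply affine_path_horizontal || apply affine_path_vertical | lra
    | intros t Ht; apply Hc;
      first [apply neq_of_Re_neq; simpl; lra | apply neq_of_Im_neq; simpl; lra]
    | intros t Ht; rewrite Cminus_pair, Re_mul_Cinv, ?(proj1 Hlen), ?(proj2 Hlen)]).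
  all: match goal with |- _ <= ?n / _ => replace n with r by (simpl; ring) end.
  1, 3: apply inv_two_le_frac; [lra | nra | ring].
  all: rewrite Rplus_comm; apply inv_two_le_frac; [lra | nra | ring].
Qed.

Lemma rect_integral_square_bound (g : C -> C) p r K : 0 < r -> 0 <= K ->
  (forall z, on_boundary (square p r) z -> Ccontinuous g z /\ Cmod (g z) <= K / Cmod (z - p)) ->
  Cmod (rect_integral g (square p r)) <= 8 * K.
Proof.
  intros Hr HK Hg. replace (8 * K) with (2 * rect_size (square p r) * (K / r))
    by (rewrite square_size; field; lra).
  apply rect_integral_bound; [apply square_proper; lra|]. intros z Hz.
  destruct (Hg z Hz) as [Hc Hle]. split; [exact Hc|].
  destruct (square_boundary_dist p r z Hr Hz) as [_ Hdist].
  eapply Rle_trans; [exact Hle|]. unfold Rdiv. apply Rmult_le_compat_l; [exact HK|].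
  apply Rinv_le_contravar; lra.
Qed.

Lemma Cmod_mul_inv_sub_sq (a p z : C) : z <> p ->
  Cmod (a * (inv_sub p z * inv_sub p z)) = Cmod a / Cmod (z - p) / Cmod (z - p).
Proof.
  intros Hz. pose proof (Cminus_eq_0 _ _ Hz) as Hz0.
  unfold inv_sub. rewrite !Cmod_mult, Cmod_inv by exact Hz0.
  pose proof (proj1 (Cmod_gt_0 _) Hz0). field. lra.
Qed.

Lemma rect_integral_kernel_approx (f : C -> C) p d eps r : 0 < r -> 0 <= eps ->
  (forall z, on_boundary (square p r) z ->
     (exists l, is_Cderive f z l) /\ Cmod (f z - f p - d * (z - p)) <= eps * Cmod (z - p)) ->
  Cmod (rect_integral (fun z => f z * (inv_sub p z * inv_sub p z))%C (square p r)
        - d * rect_integral (inv_sub p) (square p r))%C <= 8 * eps.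
Proof.
  intros Hr Heps Hf. set (k := inv_sub p).
  set (F := fun z => (f z * (k z * k z))%C).
  set (G := fun z => (f p * (k z * k z) + d * k z)%C).
  assert (Hk : forall z, on_boundary (square p r) z ->
    z <> p /\ Ccontinuous k z /\ Ccontinuous (fun x => k x * k x)%C z /\ Ccontinuous F z).
  { intros z Hz. destruct (square_boundary_dist p r z Hr Hz) as [Hzp _].
    destruct (is_Cderive_inv_sub_sq p z Hzp) as [l Hl]. destruct (proj1 (Hf z Hz)) as [lf Hlf].
    repeat split; [exact Hzp | exact (is_Cderive_continuous _ _ _ (is_Cderive_inv_sub _ _ Hzp))
      | exact (is_Cderive_continuous _ _ _ Hl)
      | exact (is_Cderive_continuous _ _ _ (is_Cderive_mult _ _ _ _ _ Hlf Hl))]. }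
  assert (HG : rect_integral G (square p r) = (d * rect_integral k (square p r))%C).
  { unfold G. rewrite rect_integral_lincomb; [|apply square_proper; lra|].
    - unfold k. rewrite rect_integral_inv_sub_sq by exact Hr. ring.
    - intros z Hz. destruct (Hk z Hz) as [_ [Hk1 [Hk2 _]]]. now split. }
  replace (rect_integral F (square p r) - d * rect_integral k (square p r))%C
    with (rect_integral (fun z => 1 * F z + (-1) * G z)%C (square p r)).
  2: { rewrite rect_integral_lincomb, HG; [ring | apply square_proper; lra|].
       intros z Hz. destruct (Hk z Hz) as [_ [Hk1 [Hk2 HF]]].
       split; [exact HF | now apply Ccontinuous_lincomb]. }
  apply rect_integral_square_bound; [exact Hr | exact Heps|]. intros z Hz.
  destruct (Hk z Hz) as [Hzp [Hk1 [Hk2 HF]]].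
  split; [apply Ccontinuous_lincomb; [exact HF | now apply Ccontinuous_lincomb]|].
  replace (1 * F z + -1 * G z)%C with ((f z - f p - d * (z - p)) * (k z * k z))%C
    by (unfold F, G, k, inv_sub; field; now apply Cminus_eq_0).
  unfold k. rewrite Cmod_mul_inv_sub_sq by exact Hzp.
  pose proof (proj1 (Cmod_gt_0 _) (Cminus_eq_0 _ _ Hzp)).
  apply Rmult_le_compat_r; [left; apply Rinv_0_lt_compat; lra|].
  apply (Rmult_le_reg_r (Cmod (z - p))); [lra|].
  unfold Rdiv at 1. rewrite Rmult_assoc, Rinv_l, Rmult_1_r by lra. exact (proj2 (Hf z Hz)).
Qed.

(* With [k = inv_sub p], the integral of [f k^2] over a square around [p] equals, on a tiny
   square, [f'(p)] times the integral of [k] (of modulus [>= 4]) up to a small error, since the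
   integral of [k^2] vanishes; on the big square it is at most [8 m / s]. *)
Theorem Cauchy_estimate (f : C -> C) p s m d : 0 < s ->
  (forall z, in_rect (square p s) z -> exists l, is_Cderive f z l) -> is_Cderive f p d ->
  (forall z, in_rect (square p s) z -> Cmod (f z) <= m) -> Cmod d <= 2 * m / s.
Proof.
  intros Hs Hf Hd Hm. set (F := fun z => (f z * (inv_sub p z * inv_sub p z))%C).
  assert (Hm0 : 0 <= m) by (eapply Rle_trans; [apply Cmod_ge_0 | apply Hm, square_center; lra]).
  assert (HF : forall z, in_rect (square p s) z -> z <> p -> exists l, is_Cderive F z l).
  { intros z Hz Hzp. destruct (Hf z Hz) as [lf Hlf].
    destruct (is_Cderive_inv_sub_sq p z Hzp) as [l Hl].
    eexists. apply is_Cderive_mult; [exact Hlf | exact Hl]. }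
  assert (Hbig : Cmod (rect_integral F (square p s)) <= 8 * (m / s)).
  { apply rect_integral_square_bound; [exact Hs | apply Rdiv_le_0_compat; lra|]. intros z Hz.
    destruct (square_boundary_dist p s z Hs Hz) as [Hzp Hdist].
    destruct (HF z (proj1 Hz) Hzp) as [l Hl]. split; [exact (is_Cderive_continuous _ _ _ Hl)|].
    unfold F. rewrite Cmod_mul_inv_sub_sq by exact Hzp.
    apply Rmult_le_compat_r; [left; apply Rinv_0_lt_compat; lra|].
    apply Rle_trans with (m / Cmod (z - p)).
    - unfold Rdiv. apply Rmult_le_compat_r; [left; apply Rinv_0_lt_compat; lra | apply Hm, Hz].
    - unfold Rdiv. apply Rmult_le_compat_l; [exact Hm0 | apply Rinv_le_contravar; lra]. }
  apply Rle_plus_epsilon. intros eps Heps.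
  destruct (Hd (eps / 2) ltac:(lra)) as [delta [Hdelta Hloc]].
  set (r := Rmin (s / 2) (delta / 8)).
  assert (Hr : 0 < r /\ r <= s / 2 /\ r <= delta / 8).
  { unfold r. pose proof (Rmin_l (s / 2) (delta / 8)). pose proof (Rmin_r (s / 2) (delta / 8)).
    assert (0 < Rmin (s / 2) (delta / 8)) by (apply Rmin_pos; lra). lra. }
  destruct Hr as [Hr0 [Hrs Hrd]].
  assert (Happrox :
    Cmod (rect_integral F (square p r) - d * rect_integral (inv_sub p) (square p r))%C
    <= 8 * (eps / 2)).
  { apply rect_integral_kernel_approx; [exact Hr0 | lra|]. intros z [[Hx Hy] Hb].
    assert (Hzs : in_rect (square p s) z) by (unfold square in *; simpl in *; split; simpl; lra).
    assert (Hclose : Cmod (z - p) < delta).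
    { pose proof (Cmod_sub_le_rect_size _ z p (conj Hx Hy) (square_center p r ltac:(lra))).
      rewrite square_size in *. lra. }
    split; [exact (Hf z Hzs) | exact (Hloc z Hclose)]. }
  rewrite (rect_integral_square_shrink F p r s) in Hbig by (auto; lra).
  assert (Hk4 : 4 <= Cmod (rect_integral (inv_sub p) (square p r))).
  { eapply Rle_trans; [exact (Im_rect_integral_inv_sub p r Hr0)|].
    eapply Rle_trans; [apply Rle_abs | apply im_le_Cmod]. }
  pose proof (Cmod_minus_le (rect_integral F (square p r))
    (rect_integral F (square p r) - d * rect_integral (inv_sub p) (square p r))%C) as Htri.
  replace (rect_integral F (square p r)
           - (rect_integral F (square p r) - d * rect_integral (inv_sub p) (square p r)))%C
    with (d * rect_integral (inv_sub p) (square p r))%C in Htri by ring.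
  rewrite Cmod_mult in Htri. pose proof (Cmod_ge_0 d).
  assert (4 * Cmod d <= 8 * (m / s) + 8 * (eps / 2)) by nra.
  unfold Rdiv in *. lra.
Qed.

(* Apply the real mean value inequality to [t |-> Re (conj D * g (u + t (v - u)))], where
   [D = g v - g u], whose increment over [[0, 1]] is [|D|^2]. *)
Lemma Cmod_mean_value (g : C -> C) u v L :
  (forall t, 0 <= t <= 1 -> exists l, is_Cderive g (u + RtoC t * (v - u))%C l /\ Cmod l <= L) ->
  Cmod (g v - g u) <= L * Cmod (v - u).
Proof.
  intros Hd. set (D := (g v - g u)%C). set (beta := fun t => (u + RtoC t * (v - u))%C).
  assert (HL : 0 <= L).
  { destruct (Hd 0 ltac:(lra)) as [l [_ Hl]]. pose proof (Cmod_ge_0 l). lra. }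
  pose proof (Cmod_ge_0 D) as HD0. pose proof (Cmod_ge_0 (v - u)%C) as Hvu.
  destruct (Req_dec (Cmod D) 0) as [HD|HD]; [rewrite HD; now apply Rmult_le_pos|].
  assert (Hmv : Rabs (Re (Cconj D * g (beta 1))%C - Re (Cconj D * g (beta 0))%C)
                <= Cmod D * Cmod (v - u) * L * Rabs (1 - 0)).
  { apply (mean_value_bound (fun s => Re (Cconj D * g (beta s))%C) 0 1); try lra.
    - intros t. apply (continuous_Re_mul_comp g (fun s => beta (clamp 0 1 s)) _ (Cmod (v - u))).
      + exact Hvu.
      + intros s. unfold beta. rewrite (Cmod_affine_path _ _ _ _ (affine_path_segment u v)).
        rewrite Rmult_comm. apply Rmult_le_compat_l; [exact Hvu | apply clamp_contraction; lra].
      + destruct (Hd (clamp 0 1 t) (clamp_between 0 1 t ltac:(lra))) as [l [Hl _]].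
        exact (is_Cderive_continuous _ _ _ Hl).
    - intros s Hs. rewrite Rmin_left, Rmax_right in Hs by lra.
      destruct (Hd s ltac:(lra)) as [l [Hl HlL]].
      exists (Re (Cconj D * ((v - u) * l))%C). split.
      + exact (is_derive_Re_mul_comp g beta _ _ _ s (affine_path_segment u v) Hl).
      + eapply Rle_trans; [apply Rabs_Re_mul_le|]. rewrite Cmod_conj, Cmod_mult.
        rewrite <- Rmult_assoc. apply Rmult_le_compat_l; [nra | exact HlL]. }
  assert (Hends : Re (Cconj D * g (beta 1))%C - Re (Cconj D * g (beta 0))%C = Cmod D ^ 2).
  { unfold beta. replace (u + RtoC 1 * (v - u))%C with v by ring.
    replace (u + RtoC 0 * (v - u))%C with u by ring.
    rewrite Re_mul_minus. fold D. rewrite Cmod2_alt. destruct D. simpl. ring. }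
  rewrite Hends, Rabs_pos_eq, Rminus_0_r, Rabs_R1, Rmult_1_r in Hmv by (apply pow2_ge_0).
  apply (Rmult_le_reg_l (Cmod D)); [lra|]. nra.
Qed.

(** * Holomorphic maps of two variables *)

Lemma norm2C_0_r h : norm2C h (RtoC 0) = Cmod h.
Proof.
  unfold norm2C. rewrite Cmod_0. replace (Cmod h ^ 2 + 0 ^ 2) with (Cmod h ^ 2) by ring.
  apply sqrt_pow2, Cmod_ge_0.
Qed.

Lemma norm2C_0_l k : norm2C (RtoC 0) k = Cmod k.
Proof.
  unfold norm2C. rewrite Cmod_0. replace (0 ^ 2 + Cmod k ^ 2) with (Cmod k ^ 2) by ring.
  apply sqrt_pow2, Cmod_ge_0.
Qed.

Lemma Cmod_le_norm2C_l h k : Cmod h <= norm2C h k.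
Proof.
  unfold norm2C. rewrite <- (sqrt_pow2 (Cmod h)) at 1 by apply Cmod_ge_0.
  apply sqrt_le_1_alt. pose proof (pow2_ge_0 (Cmod k)). lra.
Qed.

Lemma Cmod_le_norm2C_r h k : Cmod k <= norm2C h k.
Proof.
  unfold norm2C. rewrite <- (sqrt_pow2 (Cmod k)) at 1 by apply Cmod_ge_0.
  apply sqrt_le_1_alt. pose proof (pow2_ge_0 (Cmod h)). lra.
Qed.

Lemma cdiff_is_Cderive_w f z w : cdiff f z w -> exists b, is_Cderive (fun v => f z v) w b.
Proof.
  intros [a [b H]]. exists b. intros eps Heps.
  destruct (H eps Heps) as [d [Hd K]]. exists d. split; [exact Hd|]. intros w' Hw.
  destruct (Ceq_dec w' w) as [->|E].
  { replace (f z w - f z w - b * (w - w))%C with (RtoC 0) by ring.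
    rewrite Cmod_0. pose proof (Cmod_ge_0 (w - w)). nra. }
  assert (Hp : 0 < Cmod (w' - w)) by now apply Cmod_gt_0, Cminus_eq_0.
  specialize (K (RtoC 0) (w' - w)%C). rewrite norm2C_0_l in K.
  specialize (K (conj Hp Hw)).
  replace (w + (w' - w))%C with w' in K by ring. replace (z + 0)%C with z in K by ring.
  now replace (f z w' - f z w - a * 0 - b * (w' - w))%C with (f z w' - f z w - b * (w' - w))%C
    in K by ring.
Qed.

Lemma cpartial_z_is_Cderive f z w a : cpartial_z f z w a -> is_Cderive (fun x => f x w) z a.
Proof.
  intros H eps Heps. destruct (H eps Heps) as [d [Hd K]]. exists d. split; [exact Hd|].
  intros z' Hz. destruct (Ceq_dec z' z) as [->|E].
  { replace (f z w - f z w - a * (z - z))%C with (RtoC 0) by ring.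
    rewrite Cmod_0. pose proof (Cmod_ge_0 (z - z)). nra. }
  assert (Hn : (z' - z)%C <> RtoC 0) by now apply Cminus_eq_0.
  specialize (K (z' - z)%C Hn Hz). replace (z + (z' - z))%C with z' in K by ring.
  replace (f z' w - f z w - a * (z' - z))%C
    with ((z' - z) * ((f z' w - f z w) / (z' - z) - a))%C by (field; exact Hn).
  rewrite Cmod_mult, Rmult_comm. apply Rmult_le_compat_r; [apply Cmod_ge_0 | lra].
Qed.

Lemma cpartial_z_normalized f z w a zc c : cpartial_z f z w a -> c <> RtoC 0 ->
  cpartial_z (fun z' w' => ((f z' w' - f zc w') / c + zc)%C) z w (a / c)%C.
Proof.
  intros H Hc eps Heps. pose proof (proj1 (Cmod_gt_0 c) Hc) as Hcp.
  destruct (H (eps * Cmod c) ltac:(nra)) as [d [Hd K]]. exists d. split; [exact Hd|].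
  intros h Hh Hhd. specialize (K h Hh Hhd).
  replace ((((f (z + h) w - f zc w) / c + zc) - ((f z w - f zc w) / c + zc)) / h - a / c)%C
    with (((f (z + h) w - f z w) / h - a) / c)%C by (field; auto).
  rewrite Cmod_div by exact Hc. apply (Rmult_lt_reg_r (Cmod c)); [exact Hcp|].
  unfold Rdiv. rewrite Rmult_assoc, Rinv_l, Rmult_1_r by lra. exact K.
Qed.

Lemma cpartial_w_normalized f z w zc c b1 b2 :
  is_Cderive (fun v => f z v) w b1 -> is_Cderive (fun v => f zc v) w b2 -> c <> RtoC 0 ->
  cpartial_w (fun z' w' => ((f z' w' - f zc w') / c + zc)%C) z w ((b1 - b2) / c)%C.
Proof.
  intros H1 H2 Hc eps Heps. pose proof (proj1 (Cmod_gt_0 c) Hc) as Hcp.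
  destruct (is_Cderive_minus _ _ w _ _ H1 H2 (eps * Cmod c / 2) ltac:(nra)) as [d [Hd K]].
  exists d. split; [exact Hd|]. intros h Hh Hhd. specialize (K (w + h)%C).
  replace (w + h - w)%C with h in K by ring. specialize (K Hhd).
  pose proof (proj1 (Cmod_gt_0 h) Hh) as Hhp.
  replace ((((f z (w + h) - f zc (w + h)) / c + zc) - ((f z w - f zc w) / c + zc)) / h
           - (b1 - b2) / c)%C
    with (((f z (w + h) - f zc (w + h) - (f z w - f zc w) - (b1 - b2) * h) / h) / c)%C
    by (field; auto).
  rewrite !Cmod_div by auto.
  apply Rle_lt_trans with (eps * Cmod c / 2 * Cmod h / Cmod h / Cmod c).
  { unfold Rdiv. apply Rmult_le_compat_r; [left; apply Rinv_0_lt_compat; exact Hcp|].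
    apply Rmult_le_compat_r; [left; apply Rinv_0_lt_compat; exact Hhp | exact K]. }
  replace (eps * Cmod c / 2 * Cmod h / Cmod h / Cmod c) with (eps / 2) by (field; lra). lra.
Qed.

Lemma in_square c r z :
  in_rect (square c r) z <-> Rabs (Re z - Re c) <= r /\ Rabs (Im z - Im c) <= r.
Proof.
  unfold in_rect, square; simpl.
  split; intros [H1 H2].
  - split; apply Rabs_le; lra.
  - apply Rabs_le_between' in H1. apply Rabs_le_between' in H2. split; lra.
Qed.

Lemma in_square_mono c r1 r2 z : r1 <= r2 -> in_rect (square c r1) z -> in_rect (square c r2) z.
Proof. rewrite !in_square. intros H [H1 H2]. split; lra. Qed.

Lemma in_square_of_Cmod c r z : Cmod (z - c) <= r -> in_rect (square c r) z.
Proof.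
  intros H. apply in_square. pose proof (re_le_Cmod (z - c)). pose proof (im_le_Cmod (z - c)).
  rewrite Re_Cminus in *. rewrite Im_Cminus in *. split; lra.
Qed.

Lemma in_square_trans c x y r1 r2 :
  in_rect (square c r1) x -> in_rect (square x r2) y -> in_rect (square c (r1 + r2)) y.
Proof.
  rewrite !in_square. intros [H1 H2] [H3 H4].
  pose proof (Rabs_triang (Re x - Re c) (Re y - Re x)).
  pose proof (Rabs_triang (Im x - Im c) (Im y - Im x)).
  replace (Re x - Re c + (Re y - Re x)) with (Re y - Re c) in * by ring.
  replace (Im x - Im c + (Im y - Im x)) with (Im y - Im c) in * by ring. split; lra.
Qed.

Lemma in_square_translate c x y r1 r2 :
  in_rect (square c r1) x -> in_rect (square c r2) y ->
  in_rect (square c (r1 + r2)) (x + (y - c))%C.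
Proof.
  intros Hx Hy. apply (in_square_trans c x); [exact Hx|].
  apply in_square. apply in_square in Hy. destruct x, y, c. simpl in *.
  replace (r + (r3 + - r5) - r) with (r3 - r5) by ring.
  replace (r0 + (r4 + - r6) - r0) with (r4 - r6) by ring. exact Hy.
Qed.

Lemma in_square_segment c r u v t : in_rect (square c r) u -> in_rect (square c r) v ->
  0 <= t <= 1 -> in_rect (square c r) (u + RtoC t * (v - u))%C.
Proof.
  intros [Hu1 Hu2] [Hv1 Hv2] Ht. unfold in_rect, square in *; simpl in *.
  destruct u, v. simpl in *. repeat split; nra.
Qed.

Lemma Cmod_segment_le u v t : 0 <= t <= 1 -> Cmod (u + RtoC t * (v - u) - u) <= Cmod (v - u).
Proof.
  intros Ht. replace (u + RtoC t * (v - u) - u)%C with (RtoC t * (v - u))%C by ring.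
  rewrite Cmod_mult, Cmod_R, Rabs_pos_eq by lra. pose proof (Cmod_ge_0 (v - u)). nra.
Qed.

Lemma Cmod_le_of_inIt rho z : inIt rho z -> Cmod z <= 1 + rho.
Proof.
  intros [H1 H2]. eapply Rle_trans; [apply Cmod_le_Re_Im|].
  assert (Rabs (Re z) <= 1) by (apply Rabs_le; lra).
  assert (Rabs (Im z) <= rho) by (apply Rabs_le; lra). lra.
Qed.

Lemma Cmod_pair_0_r a : Cmod (a, 0) = Rabs a.
Proof. apply Cmod_R. Qed.

Lemma Cmod_pair_0_l b : Cmod (0, b) = Rabs b.
Proof.
  unfold Cmod. simpl. rewrite Rmult_0_l, Rplus_0_l, Rmult_1_r.
  apply sqrt_Rsqr_abs.
Qed.

Lemma square_in_inIt rho z0 d : inIt rho z0 ->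
  (forall q, inIt rho q -> ~ inIt_open rho q -> d <= Cmod (z0 - q)) ->
  forall x, in_rect (square z0 d) x -> inIt rho x.
Proof.
  intros [Hx0 Hy0] Hb x [Hx Hy]. destruct z0 as [x0 y0]. unfold square in *; simpl in *.
  assert (A1 : d <= 1 - x0).
  { pose proof (Hb (1, y0) ltac:(split; simpl; lra) ltac:(intros [H _]; simpl in H; lra)) as H.
    rewrite Cminus_pair, Rminus_diag, Cmod_pair_0_r in H. unfold Rabs in H; destruct Rcase_abs; lra.
    }
  assert (A2 : d <= x0 + 1).
  { pose proof (Hb (-1, y0) ltac:(split; simpl; lra) ltac:(intros [H _]; simpl in H; lra)) as H.
    rewrite Cminus_pair, Rminus_diag, Cmod_pair_0_r in H. unfold Rabs in H; destruct Rcase_abs; lra.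
    }
  assert (A3 : d <= rho - y0).
  { pose proof (Hb (x0, rho) ltac:(split; simpl; lra) ltac:(intros [_ H]; simpl in H; lra)) as H.
    rewrite Cminus_pair, Rminus_diag, Cmod_pair_0_l in H. unfold Rabs in H; destruct Rcase_abs; lra.
    }
  assert (A4 : d <= y0 + rho).
  { pose proof (Hb (x0, - rho) ltac:(split; simpl; lra) ltac:(intros [_ H]; simpl in H; lra)) as H.
    rewrite Cminus_pair, Rminus_diag, Cmod_pair_0_l in H. unfold Rabs in H; destruct Rcase_abs; lra.
    }
  split; lra.
Qed.

Lemma dist2C_same_w z0 w0 q : dist2C z0 w0 q w0 = Cmod (z0 - q).
Proof. unfold dist2C. replace (Cminus w0 w0) with (RtoC 0) by ring. apply norm2C_0_r. Qed.

Lemma dist2C_same_z z0 w0 q : dist2C z0 w0 z0 q = Cmod (w0 - q).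
Proof. unfold dist2C. replace (Cminus z0 z0) with (RtoC 0) by ring. apply norm2C_0_l. Qed.

Lemma Cmod_div_le (x c : C) K e : c <> RtoC 0 -> Cmod x <= K * e ->
  Cmod (x / c) <= K * (e / Cmod c).
Proof.
  intros Hc H. pose proof (proj1 (Cmod_gt_0 c) Hc). rewrite Cmod_div by exact Hc.
  unfold Rdiv. rewrite <- Rmult_assoc.
  apply Rmult_le_compat_r; [left; now apply Rinv_0_lt_compat | exact H].
Qed.

Section TwoVariables.

Variables (rho dl : R) (Z Zz : C -> C -> C) (zc wc : C).
Hypothesis dl_pos : 0 < dl.
Hypothesis Z_cdiff : forall z w, sqC rho z w -> cdiff Z z w.
Hypothesis Zz_partial : forall z w, sqC rho z w -> cpartial_z Z z w (Zz z w).
Hypothesis Z_values : forall z w, sqC rho z w -> inIt rho (Z z w).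
Hypothesis Zz_lt_1 : forall z w, sqC rho z w -> Cmod (Zz z w) < 1.
Hypothesis zc_square : forall x, in_rect (square zc dl) x -> inIt rho x.
Hypothesis wc_square : forall x, in_rect (square wc dl) x -> inIt rho x.

Let near_z x := in_rect (square zc (dl / 2)) x.
Let near_w x := in_rect (square wc (dl / 2)) x.
(* Cauchy's bound for [d_w Z] on squares of radius [dl / 2], where [|Z| <= 1 + rho]. *)
Let B := 4 * (1 + rho) / dl.

Lemma in_sqC z w : in_rect (square zc dl) z -> in_rect (square wc dl) w -> sqC rho z w.
Proof. intros Hz Hw. split; [apply zc_square, Hz | apply wc_square, Hw]. Qed.

Lemma near_z_square z : near_z z -> in_rect (square zc dl) z.
Proof. apply in_square_mono. lra. Qed.

Lemma near_w_square w : near_w w -> in_rect (square wc dl) w.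
Proof. apply in_square_mono. lra. Qed.

Lemma in_square_half_trans c x y :
  in_rect (square c (dl / 2)) x -> in_rect (square x (dl / 2)) y -> in_rect (square c dl) y.
Proof.
  intros Hx Hy. replace dl with (dl / 2 + dl / 2) by field.
  exact (in_square_trans _ _ _ _ _ Hx Hy).
Qed.

Lemma partial_w_bound z w b : near_z z -> near_w w -> is_Cderive (fun v => Z z v) w b ->
  Cmod b <= B.
Proof.
  intros Hz Hw Hb. unfold B.
  replace (4 * (1 + rho) / dl) with (2 * (1 + rho) / (dl / 2)) by (field; lra).
  apply (Cauchy_estimate (fun v => Z z v) w (dl / 2)); [lra | | exact Hb |].
  - intros v Hv. apply cdiff_is_Cderive_w, Z_cdiff, in_sqC;
      [apply near_z_square, Hz | exact (in_square_half_trans _ _ _ Hw Hv)].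
  - intros v Hv. apply Cmod_le_of_inIt, Z_values, in_sqC;
      [apply near_z_square, Hz | exact (in_square_half_trans _ _ _ Hw Hv)].
Qed.

Lemma Z_lipschitz_z y1 y2 w : in_rect (square zc dl) y1 -> in_rect (square zc dl) y2 ->
  in_rect (square wc dl) w -> Cmod (Z y2 w - Z y1 w) <= Cmod (y2 - y1).
Proof.
  intros H1 H2 Hw. rewrite <- (Rmult_1_l (Cmod (y2 - y1))).
  apply (Cmod_mean_value (fun y => Z y w)). intros t Ht.
  assert (Hs : sqC rho (y1 + RtoC t * (y2 - y1))%C w)
    by (apply in_sqC; [now apply in_square_segment | exact Hw]).
  exists (Zz (y1 + RtoC t * (y2 - y1))%C w). split.
  - now apply cpartial_z_is_Cderive, Zz_partial.
  - left. now apply Zz_lt_1.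
Qed.

Lemma Z_lipschitz_w y w1 w2 : near_z y -> near_w w1 -> near_w w2 ->
  Cmod (Z y w2 - Z y w1) <= B * Cmod (w2 - w1).
Proof.
  intros Hy H1 H2. apply (Cmod_mean_value (fun v => Z y v)). intros t Ht.
  assert (Hs : near_w (w1 + RtoC t * (w2 - w1))%C) by now apply in_square_segment.
  destruct (cdiff_is_Cderive_w Z y _ (Z_cdiff _ _ (in_sqC _ _ (near_z_square _ Hy)
    (near_w_square _ Hs)))) as [b Hb].
  exists b. split; [exact Hb | exact (partial_w_bound _ _ _ Hy Hs Hb)].
Qed.

(* Cauchy's estimate for [y |-> Z (y + d) w - Z y w], which is bounded by [|d|] on the
   square by the mean value inequality, since [|Zz| < 1]. *)
Lemma Zz_lipschitz_z x w : near_z x -> near_w w ->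
  Cmod (Zz x w - Zz zc w) <= 4 * Cmod (x - zc) / dl.
Proof.
  intros Hx Hw. set (d := (x - zc)%C).
  assert (Hshift : forall y, near_z y -> in_rect (square zc dl) (y + d)%C)
    by (intros y Hy; replace dl with (dl / 2 + dl / 2) by field; now apply in_square_translate).
  assert (Hder : forall y, near_z y ->
    is_Cderive (fun y => Z (y + d) w - Z y w)%C y (Zz (y + d) w - Zz y w)%C).
  { intros y Hy. apply is_Cderive_minus.
    - apply (is_Cderive_shift (fun u => Z u w)), cpartial_z_is_Cderive, Zz_partial, in_sqC;
        [now apply Hshift | now apply near_w_square].
    - apply cpartial_z_is_Cderive, Zz_partial, in_sqC;
        [now apply near_z_square | now apply near_w_square]. }
  replace (4 * Cmod d / dl) with (2 * Cmod d / (dl / 2)) by (field; lra).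
  replace (Zz x w - Zz zc w)%C with (Zz (zc + d) w - Zz zc w)%C
    by (unfold d; f_equal; f_equal; ring).
  apply (Cauchy_estimate (fun y => Z (y + d) w - Z y w)%C zc (dl / 2)); [lra | | |].
  - intros y Hy. eexists. now apply Hder.
  - apply Hder, square_center. lra.
  - intros y Hy. replace (Cmod d) with (Cmod (y + d - y)%C) by (f_equal; ring).
    apply Z_lipschitz_z; [now apply near_z_square | now apply Hshift | now apply near_w_square].
Qed.

Lemma Zz_lipschitz_w w : near_w w -> Cmod (Zz zc w - Zz zc wc) <= 4 * B * Cmod (w - wc) / dl.
Proof.
  intros Hw. assert (Hwc : near_w wc) by (apply square_center; lra).
  assert (Hder : forall y, near_z y ->
    is_Cderive (fun y => Z y w - Z y wc)%C y (Zz y w - Zz y wc)%C).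
  { intros y Hy. apply is_Cderive_minus; apply cpartial_z_is_Cderive, Zz_partial, in_sqC;
      try (now apply near_z_square); now apply near_w_square. }
  replace (4 * B * Cmod (w - wc) / dl) with (2 * (B * Cmod (w - wc)) / (dl / 2)) by (field; lra).
  apply (Cauchy_estimate (fun y => Z y w - Z y wc)%C zc (dl / 2)); [lra | | |].
  - intros y Hy. eexists. now apply Hder.
  - apply Hder, square_center. lra.
  - intros y Hy. now apply Z_lipschitz_w.
Qed.

Lemma partial_w_difference z w b1 b2 : near_z z -> near_w w ->
  is_Cderive (fun v => Z z v) w b1 -> is_Cderive (fun v => Z zc v) w b2 ->
  Cmod (b1 - b2) <= 4 * Cmod (z - zc) / dl.
Proof.
  intros Hz Hw H1 H2. assert (Hzc : near_z zc) by (apply square_center; lra).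
  assert (Hv : forall v, in_rect (square w (dl / 2)) v -> in_rect (square wc dl) v)
    by (intros v Hv; exact (in_square_half_trans _ _ _ Hw Hv)).
  replace (4 * Cmod (z - zc) / dl) with (2 * Cmod (z - zc) / (dl / 2)) by (field; lra).
  apply (Cauchy_estimate (fun v => Z z v - Z zc v)%C w (dl / 2));
    [lra | | now apply is_Cderive_minus |].
  - intros v Hvw.
    destruct (cdiff_is_Cderive_w Z z v (Z_cdiff _ _ (in_sqC _ _ (near_z_square _ Hz) (Hv v Hvw))))
      as [c1 Hc1].
    destruct (cdiff_is_Cderive_w Z zc v (Z_cdiff _ _ (in_sqC _ _ (near_z_square _ Hzc) (Hv v Hvw))))
      as [c2 Hc2].
    eexists. apply is_Cderive_minus; [exact Hc1 | exact Hc2].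
  - intros v Hvw.
    apply Z_lipschitz_z; [now apply near_z_square | now apply near_z_square | now apply Hv].
Qed.

Lemma Zz_variation z w : near_z z -> near_w w ->
  Cmod (Zz z w - Zz zc wc) <= 4 * (Cmod (z - zc) + B * Cmod (w - wc)) / dl.
Proof.
  intros Hz Hw.
  replace (Zz z w - Zz zc wc)%C with ((Zz z w - Zz zc w) + (Zz zc w - Zz zc wc))%C by ring.
  eapply Rle_trans; [apply Cmod_triangle|].
  pose proof (Zz_lipschitz_z z w Hz Hw). pose proof (Zz_lipschitz_w w Hw).
  unfold Rdiv in *. lra.
Qed.

Lemma B_ge_0 : 0 <= B.
Proof.
  destruct (zc_square zc (square_center zc dl ltac:(lra))) as [_ Hrho].
  unfold B. apply Rdiv_le_0_compat; lra.
Qed.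

Lemma first_order_z z w : near_z z -> near_w w ->
  Cmod (Z z w - Z zc w - Zz zc wc * (z - zc))
    <= 4 * (Cmod (z - zc) + B * Cmod (w - wc)) / dl * Cmod (z - zc).
Proof.
  intros Hz Hw. set (c := Zz zc wc).
  replace (Z z w - Z zc w - c * (z - zc))%C with ((Z z w - c * z) - (Z zc w - c * zc))%C by ring.
  apply (Cmod_mean_value (fun y => Z y w - c * y)%C). intros t Ht.
  set (y := (zc + RtoC t * (z - zc))%C).
  assert (Hy : near_z y)
    by (apply in_square_segment; [apply square_center; lra | exact Hz | exact Ht]).
  exists (Zz y w - c * 1)%C. split.
  - apply is_Cderive_minus; [apply cpartial_z_is_Cderive, Zz_partial, in_sqC;
      [now apply near_z_square | now apply near_w_square]|].
    apply is_Cderive_scal, is_Cderive_id.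
  - rewrite Cmult_1_r. eapply Rle_trans; [exact (Zz_variation y w Hy Hw)|].
    unfold Rdiv. apply Rmult_le_compat_r; [left; apply Rinv_0_lt_compat; lra|].
    pose proof (Cmod_segment_le zc z t Ht) as Hseg. fold y in Hseg. lra.
Qed.

Lemma normalized_mapC_C1_estimate z w : sqC rho z w -> dist2C z w zc wc <= dl / 2 ->
  Zz zc wc <> RtoC 0 ->
  exists a b,
    cpartial_z (fun z' w' => ((Z z' w' - Z zc w') / Zz zc wc + zc)%C) z w a /\
    cpartial_w (fun z' w' => ((Z z' w' - Z zc w') / Zz zc wc + zc)%C) z w b /\
    Cmod ((Z z w - Z zc w) / Zz zc wc + zc - z)%C + sqrt (Cmod (a - 1) ^ 2 + Cmod b ^ 2)
      <= 4 * (1 + B) / dl * (2 + dl / 2) * (dist2C z w zc wc / Cmod (Zz zc wc)).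
Proof.
  intros Hzw Hd Hc. set (c := Zz zc wc) in *. set (d := dist2C z w zc wc) in *.
  pose proof (proj1 (Cmod_gt_0 c) Hc) as Hcp.
  assert (Hdz : Cmod (z - zc) <= d) by apply Cmod_le_norm2C_l.
  assert (Hdw : Cmod (w - wc) <= d) by apply Cmod_le_norm2C_r.
  assert (Hz : near_z z) by (apply in_square_of_Cmod; lra).
  assert (Hw : near_w w) by (apply in_square_of_Cmod; lra).
  destruct (cdiff_is_Cderive_w Z z w (Z_cdiff _ _ Hzw)) as [b1 Hb1].
  destruct (cdiff_is_Cderive_w Z zc w (Z_cdiff _ _ (in_sqC _ _ (square_center zc dl ltac:(lra))
    (near_w_square _ Hw)))) as [b2 Hb2].
  exists (Zz z w / c)%C, ((b1 - b2) / c)%C. split; [|split].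
  - apply cpartial_z_normalized; [now apply Zz_partial | exact Hc].
  - now apply cpartial_w_normalized.
  - set (K := 4 * (1 + B) / dl).
    pose proof B_ge_0 as HB. pose proof (Cmod_ge_0 (z - zc)). pose proof (Cmod_ge_0 (w - wc)).
    assert (HV : 4 * (Cmod (z - zc) + B * Cmod (w - wc)) / dl <= K * d).
    { replace (K * d) with (4 * ((1 + B) * d) / dl) by (unfold K; field; lra).
      unfold Rdiv. apply Rmult_le_compat_r; [left; apply Rinv_0_lt_compat; lra|].
      pose proof (Rmult_le_compat_l B _ _ HB Hdw). nra. }
    assert (Ha : Cmod (Zz z w / c - 1) <= K * (d / Cmod c)).
    { replace (Zz z w / c - 1)%C with ((Zz z w - c) / c)%C by (field; exact Hc).
      apply Cmod_div_le; [exact Hc|]. eapply Rle_trans; [exact (Zz_variation z w Hz Hw) | exact HV].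
      }
    assert (Hb : Cmod ((b1 - b2) / c) <= K * (d / Cmod c)).
    { apply Cmod_div_le; [exact Hc|].
      eapply Rle_trans; [exact (partial_w_difference z w b1 b2 Hz Hw Hb1 Hb2)|].
      eapply Rle_trans; [|exact HV]. unfold Rdiv.
      apply Rmult_le_compat_r; [left; apply Rinv_0_lt_compat; lra|].
      pose proof (Rmult_le_pos _ _ HB (Cmod_ge_0 (w - wc))). lra. }
    assert (Hu : Cmod ((Z z w - Z zc w) / c + zc - z) <= K * (dl / 2) * (d / Cmod c)).
    { replace ((Z z w - Z zc w) / c + zc - z)%C with ((Z z w - Z zc w - c * (z - zc)) / c)%C
        by (field; exact Hc).
      apply Cmod_div_le; [exact Hc|].
      eapply Rle_trans; [exact (first_order_z z w Hz Hw)|].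
      assert (0 <= 4 * (Cmod (z - zc) + B * Cmod (w - wc)) / dl)
        by (apply Rdiv_le_0_compat; [pose proof (Rmult_le_pos _ _ HB (Cmod_ge_0 (w - wc))) |]; lra).
      assert (Cmod (z - zc) <= dl / 2) by lra. nra. }
    pose proof (sqrt_sum_sq_le (Cmod (Zz z w / c - 1)) (Cmod ((b1 - b2) / c))) as Hs.
    rewrite !Rabs_pos_eq in Hs by apply Cmod_ge_0.
    assert (0 <= K * (d / Cmod c))
      by (unfold K; apply Rmult_le_pos; apply Rdiv_le_0_compat; lra).
    replace (K * (2 + dl / 2) * (d / Cmod c))
      with (K * (d / Cmod c) + K * (d / Cmod c) + K * (dl / 2) * (d / Cmod c)) by ring.
    lra.
Qed.

End TwoVariables.

Lemma center_squares_inside rho d zc wc : sqC rho zc wc ->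
  (forall z w, bdryC rho z w -> d <= dist2C zc wc z w) ->
  (forall x, in_rect (square zc d) x -> inIt rho x) /\
  (forall x, in_rect (square wc d) x -> inIt rho x).
Proof.
  intros [Hz Hw] Hb. split.
  - apply square_in_inIt; [exact Hz|]. intros q Hq Hn. rewrite <- (dist2C_same_w zc wc q).
    apply Hb. split; [split; assumption | tauto].
  - apply square_in_inIt; [exact Hw|]. intros q Hq Hn. rewrite <- (dist2C_same_z zc wc q).
    apply Hb. split; [split; assumption | tauto].
Qed.

Theorem propositionB3 :
  (* (i) real case *)
  (forall (X X1 X2 : nat -> R -> R -> R) (B : nat -> R -> R -> Prop)
          (x0 y0 : nat -> R),
     (* X_j is C^2 on I^2, with first partials X1_j = d_x X_j, X2_j = d_y X_j *)
     (forall j x y, sq x y ->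
        rpartial_x sq (X j) x y (X1 j x y) /\ rpartial_y sq (X j) x y (X2 j x y)) ->
     (forall j, cont_on sq (X j) /\ C1_on sq (X1 j) /\ C1_on sq (X2 j)) ->
     (* d_x X_j does not vanish *)
     (forall j x y, sq x y -> X1 j x y <> 0) ->
     (* B_j subset of I^2, diam B_j -> 0, (x0_j,y0_j) in B_j *)
     (forall j x y, B j x y -> sq x y) ->
     (forall eps, 0 < eps -> exists N, forall j, (N <= j)%nat ->
        forall x y x' y', B j x y -> B j x' y' -> dist2R x y x' y' <= eps) ->
     (forall j, B j (x0 j) (y0 j)) ->
     (* || d_x log|d_x X_j| ||_C0 and || d_y log|d_x X_j| ||_C0 bounded *)
     (exists M, forall j x y L, sq x y ->
        rpartial_x sq (fun u v => ln (Rabs (X1 j u v))) x y L -> Rabs L <= M) ->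
     (exists M, forall j x y L, sq x y ->
        rpartial_y sq (fun u v => ln (Rabs (X1 j u v))) x y L -> Rabs L <= M) ->
     (* sup_{B_j} ( |Ups_j - x| + ||D Ups_j - (1,0)|| ) -> 0 *)
     forall eps, 0 < eps -> exists N, forall j, (N <= j)%nat ->
       forall x y, B j x y ->
         exists a b,
           rpartial_x sq (Upsilon X X1 x0 y0 j) x y a /\
           rpartial_y sq (Upsilon X X1 x0 y0 j) x y b /\
           Rabs (Upsilon X X1 x0 y0 j x y - x) + sqrt ((a - 1) ^ 2 + b ^ 2) <= eps)
  /\
  (* (ii) holomorphic case *)
  (forall (rho : R) (Z Zz : nat -> C -> C -> C) (B : nat -> C -> C -> Prop)
          (zc wc : nat -> C),
     0 < rho ->
     (* Z_j holomorphic on tilde I^2, with Zz_j = d_z Z_j, values in tilde I *)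
     (forall j, holo_near (sqC rho) (Z j)) ->
     (forall j z w, sqC rho z w -> cpartial_z (Z j) z w (Zz j z w)) ->
     (forall j z w, sqC rho z w -> inIt rho (Z j z w)) ->
     (* 0 < |d_z Z_j| < 1 *)
     (forall j z w, sqC rho z w -> 0 < Cmod (Zz j z w) < 1) ->
     (* B_j subset of tilde I^2, (z_j,w_j) in B_j *)
     (forall j z w, B j z w -> sqC rho z w) ->
     (forall j, B j (zc j) (wc j)) ->
     (* diam B_j / |d_z Z_j(z_j,w_j)| -> 0 *)
     (forall eps, 0 < eps -> exists N, forall j, (N <= j)%nat ->
        forall z w z' w', B j z w -> B j z' w' ->
          dist2C z w z' w' <= eps * Cmod (Zz j (zc j) (wc j))) ->
     (* (z_j,w_j) uniformly away from the boundary of tilde I^2 *)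
     (exists delta, 0 < delta /\ forall j z w, bdryC rho z w ->
        delta <= dist2C (zc j) (wc j) z w) ->
     (* sup_{B_j} ( |tUps_j - z| + ||D tUps_j - (1,0)|| ) -> 0 *)
     forall eps, 0 < eps -> exists N, forall j, (N <= j)%nat ->
       forall z w, B j z w ->
         exists a b,
           cpartial_z (UpsilonC Z Zz zc wc j) z w a /\
           cpartial_w (UpsilonC Z Zz zc wc j) z w b /\
           Cmod (Cminus (UpsilonC Z Zz zc wc j z w) z)
             + sqrt (Cmod (Cminus a (RtoC 1)) ^ 2 + Cmod b ^ 2) <= eps).
Proof.
  split.
  - intros X X1 X2 B x0 y0 HX HC Hnz HB Hdiam Hx0 [Mx HMx] [My HMy] eps Heps.
    set (M := Rmax 0 (Rmax Mx My)).
    assert (HM : 0 <= M /\ Mx <= M /\ My <= M).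
    { unfold M. pose proof (Rmax_l 0 (Rmax Mx My)). pose proof (Rmax_r 0 (Rmax Mx My)).
      pose proof (Rmax_l Mx My). pose proof (Rmax_r Mx My). lra. }
    destruct (Hdiam (eps / (Rabs (8 * (M * exp (4 * M))) + 1))) as [N HN].
    { apply Rdiv_lt_0_compat; [lra | pose proof (Rabs_pos (8 * (M * exp (4 * M)))); lra]. }
    exists N. intros j Hj x y Hxy.
    destruct (HC j) as [Hcont [[gx [gy [Hg [Hgcont _]]]] _]].
    destruct (normalized_map_C1_estimate (X j) (X1 j) (X2 j) gx gy M (HX j) Hcont Hg Hgcont
      (Hnz j) (fun x y L Hs Hp => Rle_trans _ _ _ (HMx j x y L Hs Hp) (proj1 (proj2 HM)))
      (fun x y L Hs Hp => Rle_trans _ _ _ (HMy j x y L Hs Hp) (proj2 (proj2 HM))) (proj1 HM)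
      x y (x0 j) (y0 j) (HB _ _ _ Hxy) (HB _ _ _ (Hx0 j))) as [a [b [Ha [Hb Hest]]]].
    exists a, b. unfold Upsilon. split; [exact Ha | split; [exact Hb|]].
    eapply Rle_trans; [exact Hest|].
    apply Rmult_le_of_le_div; [exact Heps | apply sqrt_pos | exact (HN j Hj _ _ _ _ Hxy (Hx0 j))].
  - intros rho Z Zz B zc wc Hrho Hholo HZz HZin Hmod HB Hcenter Hdiam [dl [Hdl Hbd]] eps Heps.
    set (K := 4 * (1 + 4 * (1 + rho) / dl) / dl * (2 + dl / 2)).
    destruct (Hdiam (Rmin (dl / 2) (eps / (Rabs K + 1)))) as [N HN].
    { apply Rmin_pos; [lra | apply Rdiv_lt_0_compat; [lra | pose proof (Rabs_pos K); lra]]. }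
    exists N. intros j Hj z w Hzw.
    pose proof (HB j _ _ (Hcenter j)) as Hsq0. pose proof (Hmod j _ _ Hsq0) as Hc.
    destruct (le_Rmin_mul (dl / 2) (eps / (Rabs K + 1)) _ (Cmod (Zz j (zc j) (wc j))) ltac:(lra)
      ltac:(apply Rdiv_le_0_compat; [lra | pose proof (Rabs_pos K); lra]) ltac:(lra)
      (HN j Hj z w (zc j) (wc j) Hzw (Hcenter j))) as [Hd1 Hd2].
    destruct (center_squares_inside rho dl (zc j) (wc j) Hsq0 (Hbd j)) as [Hzsq Hwsq].
    destruct (Hholo j) as [U [_ [HKU HUd]]].
    destruct (normalized_mapC_C1_estimate rho dl (Z j) (Zz j) (zc j) (wc j) Hdl
      (fun z w H => HUd z w (HKU z w H)) (HZz j) (HZin j) (fun z w H => proj2 (Hmod j z w H))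
      Hzsq Hwsq z w (HB _ _ _ Hzw) Hd1 (proj2 (Cmod_gt_0 _) (proj1 Hc))) as [a [b [Ha [Hb Hest]]]].
    exists a, b. unfold UpsilonC. split; [exact Ha | split; [exact Hb|]].
    eapply Rle_trans; [exact Hest|]. apply Rmult_le_of_le_div; [exact Heps | | exact Hd2].
    apply Rdiv_le_0_compat; [apply sqrt_pos | lra].
Qed.
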